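(* Let $A$ and $B$ be $k$-algebras and $\tau\colon B\otimes A\to A\otimes B$ a twisting map. Suppose there exist subalgebras $A_0\subseteq A$ and $B_0\subseteq B$ such that (i) the extensions $A_0\subseteq A$ and $B_0\subseteq B$ are both finite (i.e. $A$ is finitely generated as a left and as a right $A_0$-module, and similarly for $B$ over $B_0$), and (ii) the restrictions of $\tau$ to the subspaces $B\otimes A_0$ and $B_0\otimes A$ agree with the corresponding restrictions of the tensor swap $\sigma_{B,A}\colon b\otimes a\mapsto a\otimes b$. Then $\tau\colon B\otimes^!A\to A\otimes^!B$ is continuous for the cofinite topologies on $A$ and $B$, and consequently there is a coalgebra isomorphism $(A\otimes_\tau B)^\circ\cong A^\circ\otimes^{\tau^\circ}B^\circ$, where $\tau^\circ\colon A^\circ\otimes B^\circ\to B^\circ\otimes A^\circ$ is the continuous dual of $\tau$ (a cotwisting map).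
   Context: $k$ is a field (discrete topology); algebras are unital associative. For an algebra $R$, the cofinite topology is the linear topology whose open subspaces are those containing a two-sided ideal of finite codimension; $R^\circ$ is the finite dual coalgebra (functionals whose kernel contains an ideal of finite codimension, i.e. functionals continuous for the cofinite topology). For linearly topologized spaces $E,F$, $E\otimes^!F$ is $E\otimes F$ with the linear topology whose open subspaces are those containing $E_0\otimes F+E\otimes F_0$ for some open $E_0,F_0$; continuous duals $(-)^\circ=\mathrm{Top}_k(-,k)$ satisfy $(A\otimes^!B)^\circ\cong A^\circ\otimes B^\circ$ for cofinite topologies, which is how $\tau^\circ$ is regarded as a map $A^\circ\otimes B^\circ\to B^\circ\otimes A^\circ$. A twisting map $\tau\colon B\otimes A\to A\otimes B$ is a linear map such that $m_\tau=(m_A\otimes m_B)\circ(\mathrm{id}_A\otimes\tau\otimes\mathrm{id}_B)$ is an associative multiplication on $A\otimes B$ with identity $1\otimes1$, giving the algebra $A\otimes_\tau B$. For coalgebras $C,D$ and a linear map $\phi\colon C\otimes D\to D\otimes C$ such that $\Delta_\phi=(\mathrm{id}_C\otimes\phi\otimes\mathrm{id}_D)\circ(\Delta_C\otimes\Delta_D)$ is coassociative with counit $\varepsilon_C\otimes\varepsilon_D$ (a cotwisting map), $C\otimes^\phi D$ denotes the resulting coalgebra. *)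

From HB Require Import structures.
From mathcomp Require Import all_boot all_order all_algebra.
From mathcomp Require Import ring.
From mathcomp Require Import boolp classical_sets functions.
From Stdlib Require ClassicalEpsilon.

Set Warnings "-notation-overridden -ambiguous-paths -redundant-canonical-projection -projection-no-head-constant -notation-incompatible-prefix".
Set Implicit Arguments.
Unset Strict Implicit.
Unset Printing Implicit Defensive.

Import GRing.Theory.
Local Open Scope ring_scope.
Local Open Scope classical_set_scope.

Section Lin.
Variable k : fieldType.

Definition is_lin (V W : lmodType k) (f : V -> W) : Prop :=
  forall (a : k) (u v : V), f (a *: u + v) = a *: f u + f v.

Definition is_bilin (U V W : lmodType k) (f : U -> V -> W) : Prop :=
  (forall v, is_lin (fun u => f u v)) /\ (forall u, is_lin (f u)).

Definition subspace (V : lmodType k) (U : set V) : Prop :=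
  U 0 /\ forall (a : k) (u v : V), U u -> U v -> U (a *: u + v).

Definition two_sided_ideal (R : lmodType k) (mul : R -> R -> R) (I : set R) :=
  subspace I /\ forall x y, I y -> I (mul x y) /\ I (mul y x).

(* I has finite codimension: R/I is finite dimensional, i.e. I is the kernel
   of a linear map into some k^n. *)
Definition fin_codim (R : lmodType k) (I : set R) : Prop :=
  exists (n : nat) (p : R -> 'rV[k]_n), is_lin p /\ forall x, I x <-> p x = 0.

Definition cof_ideal (R : lmodType k) (mul : R -> R -> R) (I : set R) :=
  two_sided_ideal mul I /\ fin_codim I.

Definition cof_open (R : lmodType k) (mul : R -> R -> R) (U : set R) : Prop :=
  subspace U /\ exists I, cof_ideal mul I /\ I `<=` U.

Definition in_fdual (R : lmodType k) (mul : R -> R -> R) (f : R -> k^o) : Prop :=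
  is_lin f /\ exists I, cof_ideal mul I /\ forall x, I x -> f x = 0.

Definition subalg (A : algType k) (A0 : set A) : Prop :=
  A0 1 /\ subspace A0 /\ forall x y, A0 x -> A0 y -> A0 (x * y).

Definition fin_gen_left (A : algType k) (A0 : set A) : Prop :=
  exists s : seq A, forall a : A, exists c : seq A,
    size c = size s /\ (forall x, x \in c -> A0 x) /\
    a = \sum_(i < size s) c`_i * s`_i.

Definition fin_gen_right (A : algType k) (A0 : set A) : Prop :=
  exists s : seq A, forall a : A, exists c : seq A,
    size c = size s /\ (forall x, x \in c -> A0 x) /\
    a = \sum_(i < size s) s`_i * c`_i.

Definition finite_ext (A : algType k) (A0 : set A) : Prop :=
  fin_gen_left A0 /\ fin_gen_right A0.

(* continuity of a map between linearly topologized spaces, topologies given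
   by their families of open subspaces *)
Definition lin_continuous (S T : lmodType k) (OS : set S -> Prop)
  (OT : set T -> Prop) (f : S -> T) : Prop :=
  forall W : set T, OT W -> OS (fun x => W (f x)).

End Lin.

Section FDual.
Variables (k : fieldType) (R : lmodType k) (mul : R -> R -> R).

Definition fdual_pred : {pred R -> k^o} := fun f => `[< in_fdual mul f >].

Lemma in_fdual0 : in_fdual mul 0.
Proof.
split; first by move=> a u v /=; rewrite scaler0 addr0.
exists setT; split; last by [].
split.
  by split=> //; split.
exists 0%N, (fun _ => 0); split; first by move=> a u v; rewrite scaler0 addr0.
by move=> x; split.
Qed.

Lemma in_fdualL (a : k) (f g : R -> k^o) :
  in_fdual mul f -> in_fdual mul g -> in_fdual mul (a *: f + g).
Proof.
case=> lf [I [[[[I0 Il] Im] [n [p [lp Ip]]]] fI]].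
case=> lg [J [[[[J0 Jl] Jm] [m [q [lq Jq]]]] gJ]].
split.
  have E x : (a *: f + g) x = a * f x + g x by [].
  move=> b u v; rewrite !E (lf b u v) (lg b u v).
  rewrite /GRing.scale /=; ring.
exists (fun x => I x /\ J x); split; last first.
  move=> x [/fI fx /gJ gx].
  by have -> : (a *: f + g) x = a * f x + g x by []; rewrite fx gx mulr0 addr0.
split.
  split.
    split; first by split.
    by move=> b u v [Iu Ju] [Iv Jv]; split; [apply: Il|apply: Jl].
  by move=> x y [Iy Jy]; have [? ?] := Im x y Iy; have [? ?] := Jm x y Jy.
exists (n + m)%N, (fun x => row_mx (p x) (q x)); split.
  by move=> b u v; rewrite (lp b u v) (lq b u v) scale_row_mx add_row_mx.
move=> x; split.
  by move=> [/Ip px /Jq qx]; rewrite px qx row_mx0.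
move=> /eqP; rewrite -row_mx0 => /eqP /eq_row_mx [/Ip ? /Jq ?]; by [].
Qed.

Lemma fdual_closed : subsemimod_closed fdual_pred.
Proof.
have P0 : (0 : R -> k^o) \in fdual_pred by apply/asboolP; exact: in_fdual0.
split; first split.
- exact: P0.
- move=> f g /asboolP Pf /asboolP Pg; apply/asboolP.
  by have := in_fdualL 1 Pf Pg; rewrite scale1r.
- move=> a f /asboolP Pf; apply/asboolP.
  by have := in_fdualL a Pf in_fdual0; rewrite addr0.
Qed.

HB.instance Definition _ :=
  GRing.isSubmodClosed.Build k (R -> k^o) fdual_pred fdual_closed.

Record fdual := FDual { fdval :> R -> k^o ; _ : fdval \in fdual_pred }.
HB.instance Definition _ := [isSub for fdval].
HB.instance Definition _ := [Choice of fdual by <:].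
HB.instance Definition _ := [SubChoice_isSubLmodule of fdual by <:].

End FDual.

(* A "tensor product functor" is a choice, for all k-spaces V W, of a space  *)
(* tens V W with a bilinear map tm : V -> W -> tens V W that is universal    *)
(* among bilinear maps out of V x W.  The theorem is stated for an arbitrary *)
(* such choice (all choices are canonically isomorphic).                     *)

Section Tensor.
Variable k : fieldType.
Variable tens : lmodType k -> lmodType k -> lmodType k.
Variable tm : forall V W : lmodType k, V -> W -> tens V W.
Arguments tm {V W}.

Definition tensor_univ : Prop :=
  (forall V W : lmodType k, is_bilin (@tm V W)) /\
  (forall (V W X : lmodType k) (f : V -> W -> X), is_bilin f ->
     exists g : tens V W -> X, is_lin g /\ forall v w, g (tm v w) = f v w) /\
  (forall (V W X : lmodType k) (g h : tens V W -> X), is_lin g -> is_lin h ->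
     (forall v w, g (tm v w) = h (tm v w)) -> g = h).

Definition tlift (V W X : lmodType k) (f : V -> W -> X) : tens V W -> X :=
  ClassicalEpsilon.epsilon (inhabits (fun _ => 0))
    (fun g => is_lin g /\ forall v w, g (tm v w) = f v w).

Definition tmap (U V U' V' : lmodType k) (f : U -> U') (g : V -> V') :
  tens U V -> tens U' V' := tlift (fun u v => tm (f u) (g v)).

Definition tassoc (U V W : lmodType k) : tens (tens U V) W -> tens U (tens V W)
  := tlift (fun (X : tens U V) (w : W) => tlift (fun u v => tm u (tm v w)) X).

Definition tswap (V W : lmodType k) : tens V W -> tens W V :=
  tlift (fun v w => tm w v).

Definition tspan (V W : lmodType k) (P : V -> W -> Prop) : set (tens V W) :=
  fun X => exists s : seq (V * W),
    (forall p, p \in s -> P p.1 p.2) /\ X = \sum_(p <- s) tm p.1 p.2.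

(* the linear topology on E (x)^! F, given the open subspaces of E and F *)
Definition tens_open (E F : lmodType k) (OE : set E -> Prop)
  (OF : set F -> Prop) (W : set (tens E F)) : Prop :=
  subspace W /\ exists E0 F0, OE E0 /\ OF F0 /\
    tspan (fun e f => E0 e \/ F0 f) `<=` W.

(* m_tau = (m_A (x) m_B) o (id_A (x) tau (x) id_B), as a bilinear product on
   A (x) B: (a (x) b)(a' (x) b') = (m_A (x) m_B)(a (x) tau(b (x) a') (x) b') *)
Definition twisted_mul (A B : algType k) (tau : tens B A -> tens A B) :
  tens A B -> tens A B -> tens A B :=
  tlift (fun (a : A) (b : B) =>
    tlift (fun (a' : A) (b' : B) =>
      tmap (fun x : A => a * x) (fun y : B => y * b') (tau (tm b a')))).

Definition is_twisting (A B : algType k) (tau : tens B A -> tens A B) : Prop :=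
  is_lin tau /\ associative (twisted_mul tau) /\
  left_id (tm (1 : A) (1 : B)) (twisted_mul tau) /\
  right_id (tm (1 : A) (1 : B)) (twisted_mul tau).

Definition is_coalg (C : lmodType k) (delta : C -> tens C C) (eps : C -> k^o)
  : Prop :=
  is_lin delta /\ is_lin eps /\
  (forall c, tassoc (tmap delta id (delta c)) = tmap id delta (delta c)) /\
  (forall c, tlift (fun (e c' : C) => (eps e : k) *: c') (delta c) = c) /\
  (forall c, tlift (fun (c' e : C) => (eps e : k) *: c') (delta c) = c).

(* Delta_phi = (id_C (x) phi (x) id_D) o (Delta_C (x) Delta_D) *)
Definition cotw_delta (C D : lmodType k) (phi : tens C D -> tens D C)
  (deltaC : C -> tens C C) (deltaD : D -> tens D D) :
  tens C D -> tens (tens C D) (tens C D) :=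
  tlift (fun (c : C) (d : D) =>
    tlift (fun (c1 c2 : C) =>
      tlift (fun (d1 d2 : D) =>
        tlift (fun (d' : D) (c' : C) => tm (tm c1 d') (tm c' d2))
              (phi (tm c2 d1))) (deltaD d)) (deltaC c)).

Definition cotw_eps (C D : lmodType k) (epsC : C -> k^o) (epsD : D -> k^o) :
  tens C D -> k^o := tlift (fun c d => ((epsC c : k) * epsD d : k^o)).

Definition is_cotwisting (C D : lmodType k) (phi : tens C D -> tens D C)
  (deltaC : C -> tens C C) (epsC : C -> k^o)
  (deltaD : D -> tens D D) (epsD : D -> k^o) : Prop :=
  is_lin phi /\
  is_coalg (cotw_delta phi deltaC deltaD) (cotw_eps epsC epsD).

Definition fd_pair2 (R : lmodType k) (mul : R -> R -> R)
  (Z : tens (fdual mul) (fdual mul)) (x y : R) : k^o :=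
  tlift (fun g h : fdual mul => ((fdval g x : k) * fdval h y : k^o)) Z.

Definition fd_delta (R : lmodType k) (mul : R -> R -> R) (f : fdual mul) :
  tens (fdual mul) (fdual mul) :=
  ClassicalEpsilon.epsilon (inhabits 0)
    (fun Z => forall x y, fd_pair2 Z x y = fdval f (mul x y)).

Definition fd_eps (R : lmodType k) (mul : R -> R -> R) (one : R)
  (f : fdual mul) : k^o := fdval f one.

Notation fdualA A := (@fdual k A (@GRing.mul A)).

(* the canonical pairing A° (x) B° x (A (x) B) -> k, through which
   A° (x) B° is identified with (A (x)^! B)° *)
Definition tpair (A B : algType k) (xi : tens (fdualA A) (fdualA B))
  (X : tens A B) : k^o :=
  tlift (fun (f : fdualA A) (g : fdualA B) =>
    tlift (fun (a : A) (b : B) => ((fdval f a : k) * fdval g b : k^o)) X) xi.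

Definition tau_dual (A B : algType k) (tau : tens B A -> tens A B)
  (xi : tens (fdualA A) (fdualA B)) : tens (fdualA B) (fdualA A) :=
  ClassicalEpsilon.epsilon (inhabits 0)
    (fun eta => forall X : tens B A, tpair eta X = tpair xi (tau X)).

End Tensor.

Notation fdualA A := (@fdual _ A (@GRing.mul A)).

(* Let I and J be cofinite ideals of A and B.  Since A and B are finite over
   A0 and B0, the ideals I1 and J1 generated by I /\ A0 and J /\ B0 are still
   cofinite.  As tau is the flip on B (x) A0 and on B0 (x) A and is compatible
   with both multiplications, it maps B (x) I1 into I1 (x) B and J1 (x) A into
   A (x) J1; this is the continuity of tau.  The same inclusions make
   I1 (x) B + A (x) J1 a cofinite ideal of A (x)_tau B, so A° (x) B° pairs into
   (A (x)_tau B)°, and tau° exists; conversely a functional killing a cofinite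
   ideal K of A (x)_tau B factors through the cofinite slices K /\ (A (x) 1)
   and K /\ (1 (x) B).  The pairing with A (x) B being nondegenerate, the
   coalgebra axioms for Delta_{tau°} and the compatibility of the isomorphism
   become associativity and unitality of the twisted product. *)

From HB Require Import structures.
From mathcomp Require Import all_boot all_algebra.
From mathcomp Require Import ring.
From mathcomp Require Import boolp classical_sets functions.
From Stdlib Require ClassicalEpsilon.

Set Warnings "-notation-overridden -ambiguous-paths -redundant-canonical-projection -projection-no-head-constant -notation-incompatible-prefix".
Set Implicit Arguments.
Unset Strict Implicit.
Unset Printing Implicit Defensive.

Import GRing.Theory.
Local Open Scope ring_scope.
Local Open Scope classical_set_scope.

(** * Linear maps and finite codimension *)

Section LinearAlgebra.
Variable k : fieldType.

Lemma scaleoE (a x : k^o) : a *: x = a * x. Proof. by []. Qed.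

Section LinearLaws.
Variables (V W : lmodType k) (f : V -> W).
Hypothesis f_lin : is_lin f.

Lemma linD u v : f (u + v) = f u + f v.
Proof. by have := f_lin 1 u v; rewrite !scale1r. Qed.

Lemma lin0 : f 0 = 0.
Proof. by apply: (addrI (f 0)); rewrite -linD !addr0. Qed.

Lemma linZ a u : f (a *: u) = a *: f u.
Proof. by have := f_lin a u 0; rewrite !addr0 lin0 addr0. Qed.

Lemma linN u : f (- u) = - f u.
Proof. by rewrite -scaleN1r linZ scaleN1r. Qed.

Lemma linB u v : f (u - v) = f u - f v.
Proof. by rewrite linD linN. Qed.

Lemma lin_sum (I : Type) (r : seq I) (P : pred I) (F : I -> V) :
  f (\sum_(i <- r | P i) F i) = \sum_(i <- r | P i) f (F i).
Proof. exact: (big_morph f linD lin0). Qed.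

End LinearLaws.

Lemma lin_comp (U V W : lmodType k) (f : V -> W) (g : U -> V) :
  is_lin f -> is_lin g -> is_lin (f \o g).
Proof. by move=> f_lin g_lin a u v /=; rewrite g_lin f_lin. Qed.

Lemma lin_id (V : lmodType k) : is_lin (@id V).
Proof. by []. Qed.

Lemma lin_zero (V W : lmodType k) : is_lin (fun _ : V => (0 : W)).
Proof. by move=> a u v; rewrite scaler0 addr0. Qed.

Lemma lin_comb (V W : lmodType k) (f g : V -> W) (c : k) :
  is_lin f -> is_lin g -> is_lin (fun x => c *: f x + g x).
Proof.
move=> f_lin g_lin a u v; rewrite f_lin g_lin !scalerDr !scalerA mulrC.
by rewrite -!addrA; congr (_ + _); rewrite addrCA.
Qed.

Lemma lin_mull (A : algType k) (a : A) : is_lin (fun x : A => a * x).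
Proof. by move=> c u v; rewrite mulrDr scalerAr. Qed.

Lemma lin_mulr (A : algType k) (b : A) : is_lin (fun x : A => x * b).
Proof. by move=> c u v; rewrite mulrDl scalerAl. Qed.

Lemma bilin_mulr (A : algType k) : is_bilin (@GRing.mul A).
Proof. by split=> [y|x]; [exact: lin_mulr|exact: lin_mull]. Qed.

Lemma bilin_comb (U V W : lmodType k) (f g : U -> V -> W) (c : k) :
  is_bilin f -> is_bilin g -> is_bilin (fun u v => c *: f u v + g u v).
Proof.
move=> [f1 f2] [g1 g2]; split=> [v|u]; first exact: lin_comb (f1 v) (g1 v).
exact: lin_comb (f2 u) (g2 u).
Qed.

Lemma bilin_zero (U V W : lmodType k) :
  is_bilin (fun (_ : U) (_ : V) => (0 : W)).
Proof. by split=> *; exact: lin_zero. Qed.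

Lemma bilin_comp (U V W X : lmodType k) (h : W -> X) (f : U -> V -> W) :
  is_lin h -> is_bilin f -> is_bilin (fun u v => h (f u v)).
Proof.
move=> h_lin [f1 f2]; split=> [v|u]; first exact: lin_comp h_lin (f1 v).
exact: lin_comp h_lin (f2 u).
Qed.

Lemma bilin_precomp (U V U' V' W : lmodType k) (F : U' -> V' -> W)
    (f : U -> U') (g : V -> V') :
  is_bilin F -> is_lin f -> is_lin g -> is_bilin (fun u v => F (f u) (g v)).
Proof.
move=> [F1 F2] f_lin g_lin; split=> [v|u]; first exact: lin_comp (F1 (g v)) f_lin.
exact: lin_comp (F2 (f u)) g_lin.
Qed.

Lemma bilin_mul (U V : lmodType k) (f : U -> k^o) (g : V -> k^o) :
  is_lin f -> is_lin g -> is_bilin (fun u v => (f u * g v : k^o)).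
Proof.
move=> f_lin g_lin; split=> [v|u] a x y; rewrite ?f_lin ?g_lin /GRing.scale /=; ring.
Qed.

Lemma bilin_swap (U V W : lmodType k) (f : U -> V -> W) :
  is_bilin f -> is_bilin (fun v u => f u v).
Proof. by move=> [f1 f2]; split. Qed.

Section Subspace.
Variables (V : lmodType k) (U : set V).
Hypothesis U_sub : subspace U.

Lemma subspace0 : U 0. Proof. by case: U_sub. Qed.

Lemma subspaceD x y : U x -> U y -> U (x + y).
Proof. by move=> Ux Uy; have := U_sub.2 1 x y Ux Uy; rewrite scale1r. Qed.

Lemma subspaceZ a x : U x -> U (a *: x).
Proof. by move=> Ux; have := U_sub.2 a x 0 Ux subspace0; rewrite addr0. Qed.

Lemma subspaceB x y : U x -> U y -> U (x - y).
Proof. by move=> Ux Uy; apply: subspaceD => //; rewrite -scaleN1r; apply: subspaceZ. Qed.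

Lemma subspace_sum (I : eqType) (r : seq I) (F : I -> V) :
  (forall i, i \in r -> U (F i)) -> U (\sum_(i <- r) F i).
Proof.
elim: r => [|i r IH] UF; first by rewrite big_nil; apply: subspace0.
rewrite big_cons; apply: subspaceD; first exact: UF (mem_head _ _).
by apply: IH => j rj; apply: UF; rewrite inE rj orbT.
Qed.

Lemma subspace_sum_ord n (F : 'I_n -> V) : (forall i, U (F i)) -> U (\sum_i F i).
Proof. by move=> UF; apply: subspace_sum. Qed.

End Subspace.

Definition cospans (V : lmodType k) (U : set V) (T : finType) (e : T -> V) :=
  forall x, exists u : T -> k, U (x - \sum_i u i *: e i).

Definition coord_system (V : lmodType k) (U : set V) n (e : 'I_n -> V)
    (p : V -> 'rV[k]_n) :=
  is_lin p /\ (forall x, U (x - \sum_i p x 0 i *: e i)) /\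
  (forall x, U x <-> p x = 0).

Section Cospanning.
Variables (V : lmodType k) (U : set V).
Hypothesis U_sub : subspace U.

Lemma cospans_enum (T : finType) (e : T -> V) :
  cospans U e -> cospans U (fun i : 'I_#|T| => e (enum_val i)).
Proof.
move=> e_cosp x; have [u Uu] := e_cosp x; exists (fun i => u (enum_val i)).
have enumE (F : T -> V) : \sum_(i < #|T|) F (enum_val i) = \sum_t F t.
  by rewrite -big_enum_val; apply: eq_bigl => t; rewrite inE.
by rewrite (enumE (fun t => u t *: e t)).
Qed.

Lemma cospans_drop n (e : 'I_n.+1 -> V) (t : 'I_n.+1 -> k) j :
  cospans U e -> U (\sum_i t i *: e i) -> t j != 0 ->
  cospans U (fun i => e (lift j i)).
Proof.
move=> e_cosp Ut tj x; have [u Uu] := e_cosp x; set c := u j / t j.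
exists (fun i => u (lift j i) - c * t (lift j i)).
have := subspaceD U_sub Uu (subspaceZ U_sub c Ut).
rewrite (bigD1_ord j) //= (bigD1_ord j (P := xpredT)) //= scalerDr scalerA divfK //.
set A := \sum_(i < n) _; set B := \sum_(i < n) _.
have -> : \sum_(i < n) (u (lift j i) - c * t (lift j i)) *: e (lift j i) = A - c *: B.
  by rewrite scaler_sumr -sumrB; apply: eq_bigr => i _; rewrite scalerBl scalerA.
move=> U'; apply: (eq_ind _ U U').
by rewrite -addrA opprD addrACA addNr add0r opprB [c *: B - A]addrC.
Qed.

Lemma cospans_min_free n (e : 'I_n -> V) :
  cospans U e -> (forall m (e' : 'I_m -> V), cospans U e' -> (n <= m)%N) ->
  forall t, U (\sum_i t i *: e i) -> forall i, t i = 0.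
Proof.
move=> e_cosp e_min t Ut j; apply/eqP/negPn/negP => tj.
move: e e_cosp e_min t Ut j tj; case: n => [|n] e e_cosp e_min t Ut j tj; first by case: (j).
by have := e_min _ _ (cospans_drop e_cosp Ut tj); rewrite ltnn.
Qed.

(* Coordinates are taken on a cospanning family of minimal size, which is free
   modulo [U]. *)
Lemma cospans_coord_system (T : finType) (e : T -> V) :
  cospans U e -> exists n (e' : 'I_n -> V) p, coord_system U e' p.
Proof.
move=> /cospans_enum e_cosp.
have [n /asboolP [e' e'_cosp] e'_min] :=
  ex_minnP (ex_intro (fun n => `[< exists e' : 'I_n -> V, cospans U e' >]) _
                     (asboolT (ex_intro _ _ e_cosp))).
have free := cospans_min_free e'_cosp (fun m e'' c => e'_min m (asboolT (ex_intro _ e'' c))).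
have coord_uniq x (u v : 'I_n -> k) : U (x - \sum_i u i *: e' i) ->
    U (x - \sum_i v i *: e' i) -> u = v.
  move=> Uu Uv; apply/funext => i; apply/eqP; rewrite -subr_eq0; apply/eqP.
  apply: (free (fun i => u i - v i)); have := subspaceB U_sub Uv Uu; congr U.
  rewrite opprB addrC addrA addrNK -sumrB; apply: eq_bigr => j _.
  by rewrite scalerBl.
have [pf pfP] := choice e'_cosp.
pose p x : 'rV[k]_n := \row_i pf x i.
have pE x i : p x 0 i = pf x i by rewrite mxE.
exists n, e', p; split; last split.
- move=> a x y; apply/rowP => i; rewrite !mxE.
  rewrite (coord_uniq (a *: x + y) (pf (a *: x + y)) (fun i => a * pf x i + pf y i)) //.
  have := U_sub.2 a _ _ (pfP x) (pfP y); congr U.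
  rewrite scalerBr addrACA -opprD scaler_sumr -big_split /=.
  by congr (_ - _); apply: eq_bigr => j _; rewrite scalerDl scalerA.
- by move=> x; under eq_bigr do rewrite pE; exact: pfP.
- move=> x; split=> [Ux|px0].
    apply/rowP => i; rewrite pE mxE.
    rewrite (coord_uniq x (pf x) (fun _ => 0) (pfP x)) //.
    by rewrite big1 ?subr0 // => j _; rewrite scale0r.
  have := pfP x; congr U; rewrite big1 ?subr0 // => i _.
  by rewrite -pE px0 mxE scale0r.
Qed.

Lemma cospans_fin_codim (T : finType) (e : T -> V) : cospans U e -> fin_codim U.
Proof. by move=> /cospans_coord_system [n [e' [p [p_lin [_ Up]]]]]; exists n, p. Qed.

End Cospanning.

(* The rows of a matrix of maximal rank with rows in [p @` S] span [p @` S]. *)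
Lemma image_span_fin n (V : lmodType k) (p : V -> 'rV[k]_n) (S : set V) :
  exists r (xs : 'I_r -> V), (forall i, S (xs i)) /\
    forall x, S x -> exists u : 'I_r -> k, p x = \sum_i u i *: p (xs i).
Proof.
pose Q m := exists r (M : 'M[k]_(r, n)),
  (forall i, exists x, S x /\ row i M = p x) /\ \rank M = m.
have ex0 : exists m, `[< Q m >].
  exists 0%N; apply/asboolP; exists 0%N, 0; split; first by case.
  by apply/eqP; rewrite -leqn0 rank_leq_row.
have ub m : `[< Q m >] -> (m <= n)%N.
  by move=> /asboolP [r [M [_ <-]]]; exact: rank_leq_col.
have [m /asboolP [r [M [rowsM rkM]]] m_max] := ex_maxnP ex0 ub.
have /fin_all_exists [xs xsP] := rowsM.
exists r, xs; split=> [i|x Sx]; first by case: (xsP i).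
have px_sub : (p x <= M)%MS.
  apply/negPn/negP => px_out.
  have Qx : `[< Q (\rank (col_mx M (p x))) >].
    apply/asboolP; exists (r + 1)%N, (col_mx M (p x)); split => // i.
    case: (splitP i) => j ij.
      have -> : i = lshift 1 j by apply/val_inj.
      by rewrite rowKu; case: (xsP j) => Sj ->; exists (xs j).
    have -> : i = rshift r j by apply/val_inj.
    by rewrite rowKd row_id; exists x.
  have := m_max _ Qx; rewrite -addsmxE -rkM.
  have : (M < M + p x)%MS by rewrite ltmxE addsmxSl addsmx_sub submx_refl.
  by rewrite ltmxErank => /andP [_ lt] le; move: (leq_trans lt le); rewrite ltnn.
have [u ->] := submxP px_sub.
exists (fun i => u 0 i); rewrite mulmx_sum_row; apply: eq_bigr => i _.
by case: (xsP i) => _ ->.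
Qed.

Lemma fin_codim_cospans_in (V : lmodType k) (U S : set V) :
  fin_codim U ->
  exists r (xs : 'I_r -> V), (forall i, S (xs i)) /\
    forall x, S x -> exists u : 'I_r -> k, U (x - \sum_i u i *: xs i).
Proof.
move=> [n [p [p_lin Up]]].
have [r [xs [Sxs xsP]]] := image_span_fin p S.
exists r, xs; split => // x Sx; have [u pu] := xsP x Sx.
exists u; apply/Up; rewrite (linB p_lin) (lin_sum p_lin) pu.
by apply/eqP; rewrite subr_eq0; apply/eqP; apply: eq_bigr => i _; rewrite (linZ p_lin).
Qed.

Lemma fin_codim_coord_system (V : lmodType k) (U : set V) :
  subspace U -> fin_codim U -> exists n (e : 'I_n -> V) p, coord_system U e p.
Proof.
move=> U_sub /(fin_codim_cospans_in setT) [r [xs [_ xsP]]].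
by apply: (cospans_coord_system U_sub (e := xs)) => x; apply: xsP.
Qed.

Section CoordSystem.
Variables (V : lmodType k) (U : set V) (n : nat) (e : 'I_n -> V) (p : V -> 'rV[k]_n).
Hypothesis p_coord : coord_system U e p.

Lemma coord_lin i : is_lin (fun x => (p x 0 i : k^o)).
Proof. by case: p_coord => p_lin _ a x y; rewrite p_lin !mxE. Qed.

Lemma coord_vanish i x : U x -> p x 0 i = 0.
Proof. by case: p_coord => _ [_ Up] /Up ->; rewrite mxE. Qed.

Lemma coord_expand (W : lmodType k) (f : V -> W) :
  is_lin f -> (forall x, U x -> f x = 0) -> forall x, f x = \sum_i p x 0 i *: f (e i).
Proof.
case: p_coord => _ [Ue _] f_lin fU x.
have /eqP := fU _ (Ue x); rewrite (linB f_lin) (lin_sum f_lin) subr_eq0 => /eqP ->.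
by apply: eq_bigr => i _; rewrite (linZ f_lin).
Qed.

End CoordSystem.

Lemma subspace_preimage (V W : lmodType k) (f : V -> W) (U : set W) :
  is_lin f -> subspace U -> subspace (fun x => U (f x)).
Proof.
move=> f_lin [U0 UL]; split=> [|a u v Uu Uv]; first by rewrite (lin0 f_lin).
by rewrite f_lin; apply: UL.
Qed.

Lemma fin_codim_preimage (V W : lmodType k) (f : V -> W) (U : set W) :
  is_lin f -> fin_codim U -> fin_codim (fun x => U (f x)).
Proof.
move=> f_lin [n [p [p_lin Up]]]; exists n, (fun x => p (f x)); split=> // x.
exact: (lin_comp p_lin f_lin).
Qed.

Section GeneratedIdeal.
Variable R : algType k.

Definition gen_ideal (S : set R) : set R :=
  fun a => exists l : seq (R * R * R), (forall t, t \in l -> S t.1.2) /\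
    a = \sum_(t <- l) t.1.1 * t.1.2 * t.2.

Lemma gen_ideal_subspace S : subspace (gen_ideal S).
Proof.
split=> [|a u v [l [Sl ->]] [l' [Sl' ->]]]; first by exists [::]; rewrite big_nil.
exists ([seq (a *: t.1.1, t.1.2, t.2) | t <- l] ++ l'); split.
  by move=> t; rewrite mem_cat => /orP [/mapP [t' /Sl St' ->]|/Sl'].
rewrite big_cat big_map scaler_sumr; congr (_ + _).
by apply: eq_bigr => t _; rewrite !scalerAl.
Qed.

Lemma gen_idealM S x c y : S c -> gen_ideal S (x * c * y).
Proof. by move=> Sc; exists [:: (x, c, y)]; rewrite big_seq1; split=> // t /[1!inE] /eqP ->. Qed.

Lemma gen_ideal_two_sided S : two_sided_ideal *%R (gen_ideal S).
Proof.
split=> [|x y [l [Sl ->]]]; first exact: gen_ideal_subspace.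
split.
  exists [seq (x * t.1.1, t.1.2, t.2) | t <- l]; split; first by move=> t /mapP [t' /Sl ? ->].
  by rewrite big_map mulr_sumr; apply: eq_bigr => t _; rewrite !mulrA.
exists [seq (t.1.1, t.1.2, t.2 * x) | t <- l]; split; first by move=> t /mapP [t' /Sl ? ->].
by rewrite big_map mulr_suml; apply: eq_bigr => t _; rewrite !mulrA.
Qed.

Lemma gen_ideal_sub S (I : set R) :
  two_sided_ideal *%R I -> S `<=` I -> gen_ideal S `<=` I.
Proof.
move=> [I_sub I_ideal] SI a [l [Sl ->]]; apply: subspace_sum => // t /Sl /SI Ic.
by have [/(I_ideal t.2) [_ ?] _] := I_ideal t.1.1 _ Ic.
Qed.

Definition gen_ideal_in (R0 I : set R) := gen_ideal (fun c => I c /\ R0 c).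

(* [I /\ R0] has finite codimension in [R0], and multiplying a cospanning
   family of it by a finite left generating family of [R] over [R0] gives a
   cospanning family of [R] modulo the generated ideal. *)
Lemma gen_ideal_fin_codim (R0 I : set R) :
  subalg R0 -> fin_gen_left R0 -> cof_ideal *%R I ->
  fin_codim (gen_ideal_in R0 I).
Proof.
move=> [_ [R0_sub _]] [s sP] [_ I_fin].
have [r [xs [R0xs xsP]]] := fin_codim_cospans_in R0 I_fin.
apply: (cospans_fin_codim (gen_ideal_subspace _)
  (e := fun q : 'I_r * 'I_(size s) => xs q.1 * s`_q.2)) => a.
have [c [size_c [R0c ->]]] := sP a.
have R0cj (j : 'I_(size s)) : R0 c`_j by apply/R0c/mem_nth; rewrite size_c.
have /fin_all_exists [u uP] j := xsP _ (R0cj j).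
exists (fun q => u q.2 q.1); rewrite -(pair_bigA _ (fun i j => u j i *: (xs i * s`_j))).
rewrite exchange_big -sumrB; apply: subspace_sum_ord; first exact: gen_ideal_subspace.
move=> j.
have -> : c`_j * s`_j - \sum_(i < r) u j i *: (xs i * s`_j) =
          1 * (c`_j - \sum_i u j i *: xs i) * s`_j.
  rewrite mul1r mulrBl mulr_suml; congr (_ - _).
  by apply: eq_bigr => i _; rewrite scalerAl.
apply: gen_idealM; split; first exact: uP.
apply: subspaceB (R0cj j) _ => //; apply: subspace_sum_ord => // i.
exact: subspaceZ.
Qed.

Lemma gen_ideal_cof (R0 I : set R) :
  subalg R0 -> fin_gen_left R0 -> cof_ideal *%R I ->
  cof_ideal *%R (gen_ideal_in R0 I).
Proof.
by move=> R0_subalg R0_fin I_cof; split; [exact: gen_ideal_two_sided|exact: gen_ideal_fin_codim].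
Qed.

Lemma gen_ideal_subI (R0 I : set R) :
  cof_ideal *%R I -> gen_ideal_in R0 I `<=` I.
Proof. by move=> [I_ideal _]; apply: gen_ideal_sub => // c []. Qed.

End GeneratedIdeal.

End LinearAlgebra.

(** * Tensor products from their universal property *)

Section TensorCalculus.
Variable k : fieldType.
Variable tens : lmodType k -> lmodType k -> lmodType k.
Variable tm : forall V W : lmodType k, V -> W -> tens V W.
Hypothesis Htens : tensor_univ tm.
Arguments tm : clear implicits.
Local Notation "v *t w" := (tm _ _ v w) (at level 30).

Lemma tm_bilin (V W : lmodType k) : is_bilin (tm V W).
Proof. by case: Htens. Qed.

Lemma tlift_spec (V W X : lmodType k) (f : V -> W -> X) : is_bilin f ->
  is_lin (tlift tm f) /\ forall v w, tlift tm f (v *t w) = f v w.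
Proof.
move=> f_bilin; case: Htens => _ [lift_ex _].
exact: ClassicalEpsilon.epsilon_spec (lift_ex _ _ _ f f_bilin).
Qed.

Lemma tlift_lin (V W X : lmodType k) (f : V -> W -> X) : is_bilin f ->
  is_lin (tlift tm f).
Proof. by case/tlift_spec. Qed.

Lemma tlift_tm (V W X : lmodType k) (f : V -> W -> X) : is_bilin f ->
  forall v w, tlift tm f (v *t w) = f v w.
Proof. by case/tlift_spec. Qed.

Lemma tens_ext (V W X : lmodType k) (g h : tens V W -> X) :
  is_lin g -> is_lin h -> (forall v w, g (v *t w) = h (v *t w)) ->
  forall x, g x = h x.
Proof. by case: Htens => _ [_ lift_uniq] g_lin h_lin gh x; rewrite (lift_uniq _ _ _ g h). Qed.

Lemma tlift_uniq (V W X : lmodType k) (f : V -> W -> X) (g : tens V W -> X) :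
  is_bilin f -> is_lin g -> (forall v w, g (v *t w) = f v w) ->
  forall x, g x = tlift tm f x.
Proof.
move=> f_bilin g_lin gf; apply: tens_ext => // [|v w]; first exact: tlift_lin.
by rewrite gf tlift_tm.
Qed.

Lemma tlift_ext (V W X : lmodType k) (f g : V -> W -> X) :
  (forall v w, f v w = g v w) -> tlift tm f = tlift tm g.
Proof. by move=> fg; congr tlift; apply/funext => v; apply/funext => w. Qed.

Section TensorLaws.
Variables V W : lmodType k.

Lemma tmDl (u v : V) (w : W) : (u + v) *t w = u *t w + v *t w.
Proof. exact: (linD ((@tm_bilin V W).1 w)). Qed.
Lemma tmDr (v : V) (u w : W) : v *t (u + w) = v *t u + v *t w.
Proof. exact: (linD ((@tm_bilin V W).2 v)). Qed.
Lemma tmZl a (v : V) (w : W) : (a *: v) *t w = a *: v *t w.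
Proof. exact: (linZ ((@tm_bilin V W).1 w)). Qed.
Lemma tmZr a (v : V) (w : W) : v *t (a *: w) = a *: v *t w.
Proof. exact: (linZ ((@tm_bilin V W).2 v)). Qed.
Lemma tm0r (v : V) : v *t (0 : W) = 0.
Proof. exact: (lin0 ((@tm_bilin V W).2 v)). Qed.
Lemma tmNl (v : V) (w : W) : (- v) *t w = - v *t w.
Proof. exact: (linN ((@tm_bilin V W).1 w)). Qed.
Lemma tmBl (u v : V) (w : W) : (u - v) *t w = u *t w - v *t w.
Proof. exact: (linB ((@tm_bilin V W).1 w)). Qed.
Lemma tmBr (v : V) (u w : W) : v *t (u - w) = v *t u - v *t w.
Proof. exact: (linB ((@tm_bilin V W).2 v)). Qed.
Lemma tm_suml (I : Type) (r : seq I) (P : pred I) (F : I -> V) (w : W) :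
  (\sum_(i <- r | P i) F i) *t w = \sum_(i <- r | P i) F i *t w.
Proof. exact: (lin_sum ((@tm_bilin V W).1 w)). Qed.
Lemma tm_sumr (I : Type) (r : seq I) (P : pred I) (v : V) (F : I -> W) :
  v *t (\sum_(i <- r | P i) F i) = \sum_(i <- r | P i) v *t F i.
Proof. exact: (lin_sum ((@tm_bilin V W).2 v)). Qed.

Lemma tspan0 (P : V -> W -> Prop) : tspan tm P 0.
Proof. by exists [::]; rewrite big_nil. Qed.

Lemma tspanD (P : V -> W -> Prop) x y :
  tspan tm P x -> tspan tm P y -> tspan tm P (x + y).
Proof.
move=> [s [Ps ->]] [t [Pt ->]]; exists (s ++ t); split; last by rewrite big_cat.
by move=> p; rewrite mem_cat => /orP [/Ps|/Pt].
Qed.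

Lemma tspan_tm (P : V -> W -> Prop) v w : P v w -> tspan tm P (v *t w).
Proof.
by move=> Pvw; exists [:: (v, w)]; rewrite big_seq1; split=> // p; rewrite inE => /eqP ->.
Qed.

Lemma tspan_sum (P : V -> W -> Prop) (I : eqType) (r : seq I) (F : I -> tens V W) :
  (forall i, i \in r -> tspan tm P (F i)) -> tspan tm P (\sum_(i <- r) F i).
Proof.
elim: r => [|i r IH] PF; first by rewrite big_nil; apply: tspan0.
rewrite big_cons; apply: tspanD; first exact: PF (mem_head _ _).
by apply: IH => j rj; apply: PF; rewrite inE rj orbT.
Qed.

Lemma tspan_mono (P Q : V -> W -> Prop) x :
  (forall v w, P v w -> Q v w) -> tspan tm P x -> tspan tm Q x.
Proof. by move=> PQ [s [Ps ->]]; exists s; split=> // p /Ps /PQ. Qed.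

Lemma tspan_subspace (P : V -> W -> Prop) :
  (forall a v w, P v w -> P (a *: v) w) -> subspace (tspan tm P).
Proof.
move=> PZ; split=> [|a u v [s [Ps ->]] Pv]; first exact: tspan0.
apply: tspanD => //; exists [seq (a *: p.1, p.2) | p <- s]; split.
  by move=> p /mapP [q /Ps Pq ->]; apply: PZ.
by rewrite big_map scaler_sumr; apply: eq_bigr => p _; rewrite tmZl.
Qed.

(* The span of the pure tensors, with the corestricted bilinear map, is again
   universal; uniqueness of lifts then forces it to be the whole space. *)
Definition pure_span : {pred tens V W} :=
  fun X => `[< tspan tm (fun _ _ => True) X >].

Lemma pure_span_closed : subsemimod_closed pure_span.
Proof.
have S := tspan_subspace (fun _ _ _ (_ : True) => I).
split; first split.
- by apply/asboolP; exact: tspan0.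
- by move=> x y /asboolP Sx /asboolP Sy; apply/asboolP; apply: tspanD.
- by move=> a x /asboolP Sx; apply/asboolP; apply: subspaceZ.
Qed.

HB.instance Definition _ :=
  GRing.isSubmodClosed.Build k (tens V W) pure_span pure_span_closed.
Record pure_spanT := PureSpan { psval :> tens V W ; _ : psval \in pure_span }.
HB.instance Definition _ := [isSub for psval].
HB.instance Definition _ := [Choice of pure_spanT by <:].
HB.instance Definition _ := [SubChoice_isSubLmodule of pure_spanT by <:].

Lemma tens_sum (X : tens V W) :
  exists s : seq (V * W), X = \sum_(p <- s) p.1 *t p.2.
Proof.
have pure v w : v *t w \in pure_span by apply/asboolP; exact: tspan_tm.
pose f v w : pure_spanT := PureSpan (pure v w).
have f_bilin : is_bilin f.
  by split=> [w|v] a u u'; apply: val_inj; rewrite /= ?(tmDl, tmZl, tmDr, tmZr).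
have lift_lin : is_lin (fun x => psval (tlift tm f x)) by move=> a u v; rewrite tlift_lin.
have := tens_ext lift_lin (@lin_id _ _) (fun v w => congr1 psval (tlift_tm f_bilin v w)).
move=> /(_ X) /= <-; case: (tlift tm f X) => /= Y /asboolP [s [_ ->]].
by exists s.
Qed.

Lemma tens_ind (P : tens V W -> Prop) :
  P 0 -> (forall x y, P x -> P y -> P (x + y)) -> (forall v w, P (v *t w)) ->
  forall X, P X.
Proof.
move=> P0 PD Ptm X; have [s ->] := tens_sum X.
by elim: s => [|p s IH]; rewrite ?big_nil ?big_cons //; apply: PD.
Qed.

End TensorLaws.

Lemma bilin_tm (U V U' V' : lmodType k) (f : U -> U') (g : V -> V') :
  is_lin f -> is_lin g -> is_bilin (fun u v => f u *t g v).
Proof. by move=> f_lin g_lin; apply: bilin_precomp => //; exact: tm_bilin. Qed.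

Lemma tlift_comb (V W X : lmodType k) (f g : V -> W -> X) (c : k) :
  is_bilin f -> is_bilin g -> forall x,
  tlift tm (fun v w => c *: f v w + g v w) x = c *: tlift tm f x + tlift tm g x.
Proof.
move=> f_bilin g_bilin x; symmetry.
apply: (tlift_uniq (g := fun x => c *: tlift tm f x + tlift tm g x)).
- exact: bilin_comb.
- exact: lin_comb (tlift_lin f_bilin) (tlift_lin g_bilin).
by move=> v w; rewrite !tlift_tm.
Qed.

Lemma tlift_comp (V W X Y : lmodType k) (h : X -> Y) (f : V -> W -> X) :
  is_lin h -> is_bilin f -> forall x,
  h (tlift tm f x) = tlift tm (fun v w => h (f v w)) x.
Proof.
move=> h_lin f_bilin; apply: (tlift_uniq (g := fun x => h (tlift tm f x))).
- exact: bilin_comp.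
- exact: lin_comp h_lin (tlift_lin f_bilin).
by move=> v w; rewrite /= tlift_tm.
Qed.

Lemma tlift_scale (V W X : lmodType k) (f : V -> W -> X) (c : k) :
  is_bilin f -> forall x, tlift tm (fun v w => c *: f v w) x = c *: tlift tm f x.
Proof.
move=> f_bilin x; have tlift0 : tlift tm (fun (_ : V) (_ : W) => 0 : X) x = 0.
  symmetry; apply: (tlift_uniq (g := fun _ => 0)) => //; first exact: bilin_zero.
  exact: lin_zero.
have := tlift_comb c f_bilin (@bilin_zero _ V W X) x; rewrite tlift0 addr0 => <-.
by congr tlift; apply/funext => v; apply/funext => w; rewrite addr0.
Qed.

Lemma tlift_lin_param (P V W X : lmodType k) (F : P -> V -> W -> X) :
  (forall q, is_bilin (F q)) -> (forall v w, is_lin (fun q => F q v w)) ->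
  forall x, is_lin (fun q => tlift tm (F q) x).
Proof.
move=> F_bilin F_lin x a q q'.
rewrite (tlift_ext (g := fun v w => a *: F q v w + F q' v w)) ?tlift_comb //.
by move=> v w; rewrite F_lin.
Qed.

Section TensorMaps.
Variables (U V U' V' : lmodType k) (f : U -> U') (g : V -> V').
Hypotheses (f_lin : is_lin f) (g_lin : is_lin g).

Lemma tmap_tm u v : tmap tm f g (u *t v) = f u *t g v.
Proof. exact: (tlift_tm (bilin_tm f_lin g_lin)). Qed.

Lemma tmap_lin : is_lin (tmap tm f g).
Proof. exact: (tlift_lin (bilin_tm f_lin g_lin)). Qed.

Lemma tmap_tspan (P : U -> V -> Prop) (Q : U' -> V' -> Prop) X :
  (forall u v, P u v -> Q (f u) (g v)) -> tspan tm P X -> tspan tm Q (tmap tm f g X).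
Proof.
move=> PQ [s [Ps ->]]; rewrite (lin_sum tmap_lin).
by apply: tspan_sum => p /Ps Pp; rewrite tmap_tm; apply: tspan_tm; apply: PQ.
Qed.

Lemma tmap_span X :
  tspan tm (fun u' v' => exists u v, u' = f u /\ v' = g v) (tmap tm f g X).
Proof.
have [s ->] := tens_sum X; apply: (tmap_tspan (P := fun _ _ => True)).
  by move=> u v _; exists u, v.
by exists s.
Qed.

Lemma tlift_tmap (W : lmodType k) (F : U' -> V' -> W) : is_bilin F ->
  forall X, tlift tm F (tmap tm f g X) = tlift tm (fun u v => F (f u) (g v)) X.
Proof.
move=> F_bilin; have Ffg_bilin := bilin_precomp F_bilin f_lin g_lin.
apply: tens_ext.
- exact: lin_comp (tlift_lin F_bilin) tmap_lin.
- exact: tlift_lin Ffg_bilin.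
by move=> u v /=; rewrite tmap_tm !tlift_tm.
Qed.

End TensorMaps.

Lemma tmap_id (U V : lmodType k) (X : tens U V) : tmap tm id id X = X.
Proof.
by apply: (tens_ext (tmap_lin (@lin_id _ U) (@lin_id _ V)) (@lin_id _ _)) => u v; rewrite tmap_tm.
Qed.

Lemma tmap_lin_param (P U V U' V' : lmodType k) (F : P -> U -> U') (G : P -> V -> V')
    (X : tens U V) :
  (forall q, is_lin (F q)) -> (forall q, is_lin (G q)) ->
  (forall u v, is_lin (fun q => F q u *t G q v)) ->
  is_lin (fun q => tmap tm (F q) (G q) X).
Proof.
move=> F_lin G_lin FG_lin; apply: (tlift_lin_param (F := fun q u v => F q u *t G q v)) => //.
by move=> q; exact: bilin_tm.
Qed.

Section Nondegeneracy.
Variables (V W : lmodType k) (S T : Type) (eV : V -> S -> k) (eW : W -> T -> k).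
Hypothesis eV_lin : forall s, is_lin (fun v => (eV v s : k^o)).
Hypothesis eW_lin : forall t, is_lin (fun w => (eW w t : k^o)).
Hypothesis eV_sep : forall v, (forall s, eV v s = 0) -> v = 0.
Hypothesis eW_sep : forall w, (forall t, eW w t = 0) -> w = 0.

Lemma sum_tm_shift (v : V) (w : W) (l : seq (V * W)) (d : V * W -> k) :
  v = - \sum_(p <- l) d p *: p.1 ->
  v *t w + \sum_(p <- l) p.1 *t p.2 = \sum_(p <- l) p.1 *t (p.2 - d p *: w).
Proof.
move=> ->; rewrite tmNl tm_suml addrC.
by under [RHS]eq_bigr do rewrite tmBr tmZr -tmZl; rewrite sumrB.
Qed.

(* Induction on the length: a term [v (x) w] with [eW w t0 <> 0] is absorbed
   into the others, since [eV] then forces [v] into the span of the [p.1]. *)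
Lemma sum_tm_nondeg n (l : seq (V * W)) : size l = n ->
  (forall s t, \sum_(p <- l) eV p.1 s * eW p.2 t = 0) ->
  \sum_(p <- l) p.1 *t p.2 = 0.
Proof.
elim: n l => [|n IH] [|[v w] l] //=; first by rewrite big_nil.
move=> [size_l] vanish; rewrite big_cons /=.
have vanish_l s t : eV v s * eW w t + \sum_(p <- l) eV p.1 s * eW p.2 t = 0.
  by have := vanish s t; rewrite big_cons.
have [w0|/existsNP [t0 /eqP wt0]] := pselect (forall t, eW w t = 0).
  rewrite (eW_sep w0) tm0r add0r; apply: IH => // s t.
  by have := vanish_l s t; rewrite w0 mulr0 add0r.
pose d (p : V * W) := eW p.2 t0 / eW w t0.
have v_span : v = - \sum_(p <- l) d p *: p.1.
  apply/eqP; rewrite -subr_eq0 opprK; apply/eqP; apply: eV_sep => s.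
  rewrite (linD (eV_lin s)) (lin_sum (eV_lin s)).
  under eq_bigr do rewrite (linZ (eV_lin s)) scaleoE /d mulrC mulrA.
  by rewrite -mulr_suml -[eV v s](mulfK wt0) -mulrDl vanish_l mul0r.
rewrite (sum_tm_shift w v_span) -(big_map (fun p => (p.1, p.2 - d p *: w)) xpredT
  (fun p => p.1 *t p.2)).
apply: IH; first by rewrite size_map.
move=> s t; rewrite big_map /=.
under eq_bigr do rewrite (linB (eW_lin t)) (linZ (eW_lin t)) scaleoE mulrBr.
rewrite sumrB; apply/eqP; rewrite subr_eq0; apply/eqP.
have /eqP := vanish_l s t; rewrite addrC addr_eq0 => /eqP ->.
rewrite v_span (linN (eV_lin s)) (lin_sum (eV_lin s)) mulNr mulr_suml opprK.
by apply: eq_bigr => p _; rewrite (linZ (eV_lin s)) scaleoE mulrCA mulrA.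
Qed.

Lemma tens_nondeg (X : tens V W) :
  (forall s t, tlift tm (fun v w => (eV v s * eW w t : k^o)) X = 0) -> X = 0.
Proof.
have [l ->] := tens_sum X => vanish; apply: (sum_tm_nondeg (erefl _)) => s t.
have e_bilin := bilin_mul (eV_lin s) (eW_lin t).
have := vanish s t; rewrite (lin_sum (tlift_lin e_bilin)).
by under eq_bigr do rewrite (tlift_tm e_bilin).
Qed.

Lemma tens_pairing_inj (X Y : tens V W) :
  (forall s t, tlift tm (fun v w => (eV v s * eW w t : k^o)) X =
               tlift tm (fun v w => (eV v s * eW w t : k^o)) Y) -> X = Y.
Proof.
move=> XY; apply/eqP; rewrite -subr_eq0; apply/eqP; apply: tens_nondeg => s t.
by rewrite (linB (tlift_lin (bilin_mul (eV_lin s) (eW_lin t)))) XY subrr.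
Qed.

End Nondegeneracy.

(** * Finite duals *)

Section FiniteDual.
Variables (R : lmodType k) (mul : R -> R -> R).

Definition fdual_of (f : R -> k^o) (f_in : in_fdual mul f) : fdual mul :=
  @FDual _ _ mul f (introT (asboolP _) f_in).

Lemma fdvalP (g : fdual mul) : in_fdual mul (fdval g).
Proof. by case: g => f /= /asboolP. Qed.

Lemma fdval_lin (g : fdual mul) : is_lin (fdval g).
Proof. by case: (fdvalP g). Qed.

Lemma fdval_eval_lin x : is_lin (fun g : fdual mul => (fdval g x : k^o)).
Proof. by []. Qed.

Lemma fdual_ext (g h : fdual mul) : (forall x, fdval g x = fdval h x) -> g = h.
Proof. by move=> gh; apply: val_inj; apply/funext => x /=; rewrite gh. Qed.

Lemma fdual_sep (g : fdual mul) : (forall x, fdval g x = 0) -> g = 0.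
Proof. by move=> g0; apply: fdual_ext => x; rewrite g0. Qed.

Lemma coord_in_fdual (I : set R) n (e : 'I_n -> R) p i :
  cof_ideal mul I -> coord_system I e p -> in_fdual mul (fun x => (p x 0 i : k^o)).
Proof.
move=> I_cof p_coord; split; first exact: (coord_lin p_coord i).
by exists I; split=> // x Ix; apply: (coord_vanish p_coord i Ix).
Qed.

End FiniteDual.

Section FiniteDualPairing.
Variables (R S : lmodType k) (mulR : R -> R -> R) (mulS : S -> S -> S).

Definition fpair (Z : tens (fdual mulR) (fdual mulS)) (x : R) (y : S) : k^o :=
  tlift tm (fun g h => (fdval g x * fdval h y : k^o)) Z.

Lemma fpair_integrand_bilin x y :
  is_bilin (fun (g : fdual mulR) (h : fdual mulS) => (fdval g x * fdval h y : k^o)).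
Proof. exact: bilin_mul (fdval_eval_lin x) (fdval_eval_lin y). Qed.

Lemma fpair_tm g h x y : fpair (g *t h) x y = fdval g x * fdval h y.
Proof. exact: (tlift_tm (fpair_integrand_bilin x y)). Qed.

Lemma fpair_lin x y : is_lin (fun Z => fpair Z x y).
Proof. exact: (tlift_lin (fpair_integrand_bilin x y)). Qed.

Lemma fpair_inj Z Z' : (forall x y, fpair Z x y = fpair Z' x y) -> Z = Z'.
Proof.
apply: (tens_pairing_inj (eV := fun g x => fdval g x) (eW := fun h y => fdval h y)).
- exact: fdval_eval_lin.
- exact: fdval_eval_lin.
- exact: fdual_sep.
- exact: fdual_sep.
Qed.

(* [Z] is a finite sum of products of coordinate functionals modulo [I] and [J]. *)
Lemma fdual_tens_repr (I : set R) (J : set S) (G : R -> S -> k^o) :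
  cof_ideal mulR I -> cof_ideal mulS J -> is_bilin G ->
  (forall x y, I x -> G x y = 0) -> (forall x y, J y -> G x y = 0) ->
  exists Z, forall x y, fpair Z x y = G x y.
Proof.
move=> I_cof J_cof [G1 G2] GI GJ.
have [[[I_sub _] I_fin] [[J_sub _] J_fin]] := (I_cof, J_cof).
have [n [e [p p_coord]]] := fin_codim_coord_system I_sub I_fin.
have [m [e' [q q_coord]]] := fin_codim_coord_system J_sub J_fin.
pose cI i := fdual_of (coord_in_fdual i I_cof p_coord).
pose cJ j := fdual_of (coord_in_fdual j J_cof q_coord).
exists (\sum_i \sum_j G (e i) (e' j) *: (cI i *t cJ j)) => x y.
rewrite (lin_sum (fpair_lin x y)) (coord_expand p_coord (G1 y) (GI^~ y) x).
apply: eq_bigr => i _; rewrite (lin_sum (fpair_lin x y)).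
rewrite (coord_expand q_coord (G2 (e i)) (GJ (e i)) y) scaleoE mulr_sumr.
apply: eq_bigr => j _; rewrite (linZ (fpair_lin x y)) fpair_tm /=.
by rewrite /GRing.scale /=; ring.
Qed.

End FiniteDualPairing.

Lemma fd_delta_spec (R : lmodType k) (mul : R -> R -> R) : is_bilin mul ->
  forall (f : fdual mul) x y, fd_pair2 tm (fd_delta tm f) x y = fdval f (mul x y).
Proof.
move=> [mul1 mul2] f; have [f_lin [I [I_cof fI]]] := fdvalP f.
have [[_ I_ideal] _] := I_cof.
have G_bilin : is_bilin (fun x y => fdval f (mul x y)).
  by split=> [y|x]; apply: lin_comp f_lin _.
have [Z ZP] := fdual_tens_repr I_cof I_cof G_bilin
  (fun x y Ix => fI _ (I_ideal y x Ix).2) (fun x y Iy => fI _ (I_ideal x y Iy).1).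
exact: (ClassicalEpsilon.epsilon_spec (inhabits 0)
  (fun Z => forall x y, fd_pair2 tm Z x y = fdval f (mul x y)) (ex_intro _ Z ZP)).
Qed.

Lemma fd_delta_lin (R : lmodType k) (mul : R -> R -> R) :
  is_bilin mul -> is_lin (@fd_delta _ _ tm R mul).
Proof.
move=> mul_bilin a f g; apply: fpair_inj => x y.
by rewrite (fpair_lin x y); rewrite /fpair -!/(fd_pair2 _ _ _ _) !fd_delta_spec.
Qed.

Section TensorPairing.
Variables A B : algType k.
Local Notation FA := (fdualA A).
Local Notation FB := (fdualA B).

Lemma fdval_prod_bilin (f : FA) (g : FB) :
  is_bilin (fun a b => (fdval f a * fdval g b : k^o)).
Proof. exact: bilin_mul (fdval_lin f) (fdval_lin g). Qed.

Lemma tpair_integrand_bilin (X : tens A B) :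
  is_bilin (fun (f : FA) (g : FB) =>
    tlift tm (fun a b => (fdval f a * fdval g b : k^o)) X).
Proof.
split=> [g|f].
  apply: (tlift_lin_param (F := fun f a b => (fdval f a * fdval g b : k^o))).
    by move=> f; exact: fdval_prod_bilin.
  by move=> a b; exact: (bilin_mul (fdval_eval_lin a) (fdval_eval_lin b)).1.
apply: (tlift_lin_param (F := fun g a b => (fdval f a * fdval g b : k^o))).
  by move=> g; exact: fdval_prod_bilin.
by move=> a b; exact: (bilin_mul (fdval_eval_lin a) (fdval_eval_lin b)).2.
Qed.

Lemma tpair_linl (X : tens A B) : is_lin (fun xi : tens FA FB => tpair tm xi X).
Proof. exact: (tlift_lin (tpair_integrand_bilin X)). Qed.

Lemma tpair_linr (xi : tens FA FB) : is_lin (tpair tm xi).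
Proof.
apply: (tlift_lin_param (F := fun X f g =>
  tlift tm (fun a b => (fdval f a * fdval g b : k^o)) X)).
  exact: tpair_integrand_bilin.
by move=> f g; exact: (tlift_lin (fdval_prod_bilin f g)).
Qed.

Lemma tpair_tmr (xi : tens FA FB) a b : tpair tm xi (a *t b) = fpair xi a b.
Proof.
rewrite /tpair; congr (tlift tm _ xi); apply/funext => f; apply/funext => g.
exact: (tlift_tm (fdval_prod_bilin f g)).
Qed.

Lemma tpair_tm (f : FA) (g : FB) a b :
  tpair tm (f *t g) (a *t b) = fdval f a * fdval g b.
Proof. by rewrite tpair_tmr fpair_tm. Qed.

Lemma tpair_inj (xi xi' : tens FA FB) :
  (forall a b, tpair tm xi (a *t b) = tpair tm xi' (a *t b)) -> xi = xi'.
Proof. by move=> xixi'; apply: fpair_inj => a b; rewrite -!tpair_tmr. Qed.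

Lemma tpair_sep (xi : tens FA FB) : (forall X, tpair tm xi X = 0) -> xi = 0.
Proof. by move=> xi0; apply: tpair_inj => a b; rewrite xi0 (lin0 (tpair_linl _)). Qed.

Lemma tpair_ext (xi : tens FA FB) (F : tens A B -> k^o) :
  is_lin F -> (forall a b, tpair tm xi (a *t b) = F (a *t b)) ->
  forall X, tpair tm xi X = F X.
Proof. by move=> F_lin; apply: tens_ext => //; exact: tpair_linr. Qed.

End TensorPairing.

(** * The twisted tensor product and its finite dual *)

Section TwistedAlgebra.
Variables (A B : algType k) (tau : tens B A -> tens A B).
Hypothesis tau_twisting : is_twisting tm tau.
Variables (A0 : set A) (B0 : set B).
Hypothesis A0_subalg : subalg A0.
Hypothesis B0_subalg : subalg B0.
Hypothesis tau_A0 : forall X, tspan tm (fun (b : B) (a : A) => A0 a) X ->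
  tau X = tswap tm X.
Hypothesis tau_B0 : forall X, tspan tm (fun (b : B) (a : A) => B0 b) X ->
  tau X = tswap tm X.

Local Notation tmul := (twisted_mul tm tau).

Lemma tau_lin : is_lin tau. Proof. by case: tau_twisting. Qed.

Lemma tswap_tm (b : B) (a : A) : tswap tm (b *t a) = a *t b.
Proof. exact: (tlift_tm (bilin_swap (@tm_bilin A B))). Qed.

Lemma tau_flipA (b : B) (a : A) : A0 a -> tau (b *t a) = a *t b.
Proof. by move=> A0a; rewrite tau_A0 ?tswap_tm //; apply: tspan_tm. Qed.

Lemma tau_flipB (b : B) (a : A) : B0 b -> tau (b *t a) = a *t b.
Proof. by move=> B0b; rewrite tau_B0 ?tswap_tm //; apply: tspan_tm. Qed.

Lemma tau1l (a : A) : tau (1 *t a) = a *t 1.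
Proof. by apply: tau_flipB; case: B0_subalg. Qed.

Lemma tau1r (b : B) : tau (b *t 1) = 1 *t b.
Proof. by apply: tau_flipA; case: A0_subalg. Qed.

Definition tw_prod (a : A) (b : B) (a' : A) (b' : B) : tens A B :=
  tmap tm (fun x => a * x) (fun y => y * b') (tau (b *t a')).

Lemma tw_prod_bilin a b : is_bilin (tw_prod a b).
Proof.
split=> [b'|a'].
  apply: lin_comp (tmap_lin (lin_mull a) (lin_mulr b')) _.
  exact: lin_comp tau_lin ((@tm_bilin B A).2 b).
apply: (tmap_lin_param (F := fun _ x => a * x) (G := fun b' y => y * b')).
- by move=> _; exact: lin_mull.
- by move=> b'; exact: lin_mulr.
by move=> u v; exact: lin_comp ((@tm_bilin A B).2 (a * u)) (lin_mull v).
Qed.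

Lemma tw_prod_lift_bilin : is_bilin (fun a b => tlift tm (tw_prod a b)).
Proof.
split=> [b|a] c u v; apply/funext => X /=.
  rewrite (tlift_ext (g := fun a' b' => c *: tw_prod u b a' b' + tw_prod v b a' b')).
    by rewrite tlift_comb //; exact: tw_prod_bilin.
  move=> a' b'; rewrite /tw_prod.
  apply: (tmap_lin_param (F := fun q x => q * x) (G := fun _ y => y * b')).
  - exact: lin_mull.
  - by move=> _; exact: lin_mulr.
  by move=> x y; exact: lin_comp ((@tm_bilin A B).1 (y * b')) (lin_mulr x).
rewrite (tlift_ext (g := fun a' b' => c *: tw_prod a u a' b' + tw_prod a v a' b')).
  by rewrite tlift_comb //; exact: tw_prod_bilin.
move=> a' b'; rewrite /tw_prod tmDl tmZl tau_lin.
exact: (tmap_lin (lin_mull a) (lin_mulr b')).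
Qed.

Lemma tmul_tm a b a' b' : tmul (a *t b) (a' *t b') = tw_prod a b a' b'.
Proof.
rewrite /twisted_mul (tlift_tm tw_prod_lift_bilin).
exact: (tlift_tm (tw_prod_bilin a b)).
Qed.

Lemma tmul_linl Y : is_lin (tmul^~ Y).
Proof. by move=> c u v; rewrite /twisted_mul (tlift_lin tw_prod_lift_bilin). Qed.

Lemma tmul_linr X : is_lin (tmul X).
Proof.
move: X; apply: tens_ind => [|X Y X_lin Y_lin|a b] c u v.
- by rewrite !(lin0 (tmul_linl _)) scaler0 addr0.
- rewrite !(linD (tmul_linl _)) X_lin Y_lin scalerDr.
  by rewrite -!addrA; congr (_ + _); rewrite addrCA.
rewrite /twisted_mul (tlift_tm tw_prod_lift_bilin).
exact: (tlift_lin (tw_prod_bilin a b)).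
Qed.

Lemma tmul_bilin : is_bilin tmul.
Proof. by split=> [Y|X]; [exact: tmul_linl|exact: tmul_linr]. Qed.

Lemma tmul_assoc : associative tmul.
Proof. by case: tau_twisting => _ []. Qed.

Lemma tmul_1tm_l (x a : A) (b : B) : tmul (x *t 1) (a *t b) = (x * a) *t b.
Proof. by rewrite tmul_tm /tw_prod tau1l (tmap_tm (lin_mull x) (lin_mulr b)) mul1r. Qed.

Lemma tmul_1tm_r (a : A) (b y : B) : tmul (a *t b) (1 *t y) = a *t (b * y).
Proof. by rewrite tmul_tm /tw_prod tau1r (tmap_tm (lin_mull a) (lin_mulr y)) mulr1. Qed.

Lemma tmul_tau (b : B) (a : A) : tmul (1 *t b) (a *t 1) = tau (b *t a).
Proof.
rewrite tmul_tm /tw_prod -[RHS]tmap_id; congr tmap; apply/funext => x.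
- exact: mul1r.
- exact: mulr1.
Qed.

Lemma tmul_A0r (c : A) Z : A0 c -> tmul Z (c *t 1) = tmap tm (fun a => a * c) id Z.
Proof.
move=> A0c; move: Z; apply: tens_ext => [||a b].
- exact: tmul_linl.
- exact: tmap_lin (lin_mulr c) (@lin_id _ _).
 rewrite tmul_tm /tw_prod tau_flipA // (tmap_tm (lin_mulr c) (@lin_id _ _)).
by rewrite (tmap_tm (lin_mull a) (lin_mulr 1)) mulr1.
Qed.

Lemma tmul_B0l (c : B) Z : B0 c -> tmul (1 *t c) Z = tmap tm id (fun b => c * b) Z.
Proof.
move=> B0c; move: Z; apply: tens_ext => [||a b].
- exact: tmul_linr.
- exact: tmap_lin (@lin_id _ _) (lin_mull c).
 rewrite tmul_tm /tw_prod tau_flipB // (tmap_tm (@lin_id _ _) (lin_mull c)).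
by rewrite (tmap_tm (lin_mull 1) (lin_mulr b)) mul1r.
Qed.

Lemma tau_mulr (b : B) (a a' : A) : tau (b *t (a * a')) = tmul (tau (b *t a)) (a' *t 1).
Proof. by rewrite -tmul_tau -tmul_1tm_l tmul_assoc tmul_tau. Qed.

Lemma tau_mull (b b' : B) (a : A) : tau ((b * b') *t a) = tmul (1 *t b) (tau (b' *t a)).
Proof. by rewrite -tmul_tau -[1 *t (b * b')]tmul_1tm_r -tmul_assoc tmul_tau. Qed.

(* [tau (b (x) x c y) = tau (b (x) x) (c (x) 1) (y (x) 1)], and [c] passes
   through [tau] untouched. *)
Lemma tau_gen_idealA (I : set A) a : gen_ideal_in A0 I a ->
  forall b, tspan tm (fun u (_ : B) => gen_ideal_in A0 I u) (tau (b *t a)).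
Proof.
move=> [l [Sl ->]] b.
rewrite tm_sumr (lin_sum tau_lin); apply: tspan_sum => t /Sl Sc.
rewrite tau_mulr tau_mulr (tmul_A0r _ Sc.2).
have [l' ->] := tens_sum (tau (b *t t.1.1)).
rewrite (lin_sum (tmap_lin (lin_mulr t.1.2) (@lin_id _ _))) (lin_sum (tmul_linl _)).
apply: tspan_sum => p _; rewrite (tmap_tm (lin_mulr t.1.2) (@lin_id _ _)) tmul_tm.
apply: tspan_mono (tmap_span (lin_mull _) (lin_mulr _) _) => u' v' [u [v [-> _]]].
exact: gen_idealM.
Qed.

Lemma tau_gen_idealB (J : set B) b : gen_ideal_in B0 J b ->
  forall a, tspan tm (fun (_ : A) v => gen_ideal_in B0 J v) (tau (b *t a)).
Proof.
move=> [l [Sl ->]] a.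
rewrite tm_suml (lin_sum tau_lin); apply: tspan_sum => t /Sl Sc.
rewrite -mulrA tau_mull tau_mull (tmul_B0l _ Sc.2).
have [l' ->] := tens_sum (tau (t.2 *t a)).
rewrite (lin_sum (tmap_lin (@lin_id _ _) (lin_mull t.1.2))) (lin_sum (tmul_linr _)).
apply: tspan_sum => p _; rewrite (tmap_tm (@lin_id _ _) (lin_mull t.1.2)) tmul_tm.
apply: tspan_mono (tmap_span (lin_mull _) (lin_mulr _) _) => u' v' [u [v [_ ->]]].
by rewrite mulrA; apply: gen_idealM.
Qed.

Hypothesis A0_fin : finite_ext A0.
Hypothesis B0_fin : finite_ext B0.

Theorem tau_continuous :
  lin_continuous
    (tens_open tm (cof_open (@GRing.mul B)) (cof_open (@GRing.mul A)))
    (tens_open tm (cof_open (@GRing.mul A)) (cof_open (@GRing.mul B)))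
    tau.
Proof.
move=> W [W_sub [E0 [F0 [[_ [I [I_cof IE]]] [[_ [J [J_cof JF]]] EFW]]]]].
have open_gen (R : algType k) (R0 K : set R) : subalg R0 -> finite_ext R0 -> cof_ideal *%R K ->
    cof_open *%R (gen_ideal_in R0 K).
  move=> R0_subalg [R0_fin _] K_cof; split; first exact: gen_ideal_subspace.
  by exists (gen_ideal_in R0 K); split=> //; exact: gen_ideal_cof.
split.
  split=> [|a u v Wu Wv] /=; first by rewrite (lin0 tau_lin); apply: subspace0.
  by rewrite tau_lin; apply: W_sub.2.
exists (gen_ideal_in B0 J), (gen_ideal_in A0 I).
split; first exact: open_gen B0_subalg B0_fin J_cof.
split; first exact: open_gen A0_subalg A0_fin I_cof.
move=> X [s [sP ->]] /=; rewrite (lin_sum tau_lin); apply: (subspace_sum W_sub) => p.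
move=> /sP [J1p|I1p]; apply: EFW.
  apply: tspan_mono (tau_gen_idealB J1p p.2) => u v J1v.
  by right; apply: JF; exact: (gen_ideal_subI J_cof J1v).
apply: tspan_mono (tau_gen_idealA I1p p.1) => u v I1u.
by left; apply: IE; exact: (gen_ideal_subI I_cof I1u).
Qed.

Section TwistedIdeal.
Variables (I : set A) (J : set B).
Hypotheses (I_cof : cof_ideal *%R I) (J_cof : cof_ideal *%R J).

Definition tw_ideal : set (tens A B) :=
  tspan tm (fun a b => gen_ideal_in A0 I a \/ gen_ideal_in B0 J b).

Lemma tw_ideal_subspace : subspace tw_ideal.
Proof.
apply: tspan_subspace => a v w [I1v|]; last by right.
by left; apply: subspaceZ I1v; exact: gen_ideal_subspace.
Qed.

Lemma tw_ideal_tmul (x a : A) (y b : B) :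
  gen_ideal_in A0 I a \/ gen_ideal_in B0 J b ->
  tw_ideal (tmul (x *t y) (a *t b)) /\ tw_ideal (tmul (a *t b) (x *t y)).
Proof.
have [_ I1_ideal] := gen_ideal_two_sided (fun c => I c /\ A0 c).
have [_ J1_ideal] := gen_ideal_two_sided (fun c => J c /\ B0 c).
move=> ab; rewrite !tmul_tm /tw_prod; split; case: ab => [I1a|J1b].
- apply: (tmap_tspan (lin_mull _) (lin_mulr _) _ (tau_gen_idealA I1a y)).
  by move=> u v I1u; left; case: (I1_ideal x u I1u).
- apply: tspan_mono (tmap_span (lin_mull _) (lin_mulr _) _) => u' _ [u [v [_ ->]]].
  by right; case: (J1_ideal v b J1b).
- apply: tspan_mono (tmap_span (lin_mull _) (lin_mulr _) _) => _ v' [u [v [-> _]]].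
  by left; case: (I1_ideal u a I1a).
apply: (tmap_tspan (lin_mull _) (lin_mulr _) _ (tau_gen_idealB J1b x)).
by move=> u v J1v; right; case: (J1_ideal y v J1v).
Qed.

Lemma tw_ideal_two_sided : two_sided_ideal tmul tw_ideal.
Proof.
split=> [|X Y [s [sP ->]]]; first exact: tw_ideal_subspace.
have [l ->] := tens_sum X.
rewrite (lin_sum (tmul_linl _)) (lin_sum (tmul_linr _)).
split; apply: tspan_sum => q _.
  rewrite (lin_sum (tmul_linr _)); apply: tspan_sum => p /sP ab.
  by case: (tw_ideal_tmul q.1 q.2 ab).
rewrite (lin_sum (tmul_linl _)); apply: tspan_sum => p /sP ab.
by case: (tw_ideal_tmul q.1 q.2 ab).
Qed.

(* Products of coordinate vectors modulo the two generated ideals cospan,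
   because [a (x) b - a' (x) b' = (a - a') (x) b + a' (x) (b - b')]. *)
Lemma tw_ideal_fin_codim : fin_codim tw_ideal.
Proof.
have [[[I1_sub _] I1_fin] [[J1_sub _] J1_fin]] :=
  (gen_ideal_cof A0_subalg A0_fin.1 I_cof, gen_ideal_cof B0_subalg B0_fin.1 J_cof).
have [n [e [p [_ [pP _]]]]] := fin_codim_coord_system I1_sub I1_fin.
have [m [e' [q [_ [qP _]]]]] := fin_codim_coord_system J1_sub J1_fin.
apply: (cospans_fin_codim tw_ideal_subspace (e := fun ij : 'I_n * 'I_m => e ij.1 *t e' ij.2)).
move=> X; have [l ->] := tens_sum X.
exists (fun ij => \sum_(t <- l) p t.1 0 ij.1 * q t.2 0 ij.2).
have -> : \sum_ij (\sum_(t <- l) p t.1 0 ij.1 * q t.2 0 ij.2) *: (e ij.1 *t e' ij.2) =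
    \sum_(t <- l) (\sum_i p t.1 0 i *: e i) *t (\sum_j q t.2 0 j *: e' j).
  under eq_bigr do rewrite scaler_suml.
  rewrite exchange_big /=; apply: eq_bigr => t _.
  rewrite tm_suml; under [RHS]eq_bigr do rewrite tm_sumr.
  rewrite pair_bigA /=; apply: eq_bigr => -[i j] _ /=.
  by rewrite tmZl tmZr scalerA.
rewrite -sumrB; apply: (subspace_sum tw_ideal_subspace) => t _.
rewrite -[t.1 *t t.2](subrK (t.1 *t (\sum_j q t.2 0 j *: e' j))) -addrA -tmBr -tmBl.
apply: tspanD; apply: tspan_tm; [right; exact: qP|left; exact: pP].
Qed.

Lemma tw_ideal_cof : cof_ideal tmul tw_ideal.
Proof. by split; [exact: tw_ideal_two_sided|exact: tw_ideal_fin_codim]. Qed.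

End TwistedIdeal.

Local Notation FA := (fdualA A).
Local Notation FB := (fdualA B).

Lemma tpair_in_fdual (xi : tens FA FB) : in_fdual tmul (tpair tm xi).
Proof.
move: xi; apply: tens_ind => [|xi xi' xiP xi'P|f g].
- have -> : tpair tm 0 = 0 :> (tens A B -> k^o).
    by apply/funext => X; rewrite (lin0 (tpair_linl X)).
  exact: in_fdual0.
- have -> : tpair tm (xi + xi') = 1 *: tpair tm xi + tpair tm xi'.
    by apply/funext => X; rewrite (linD (tpair_linl X)) scale1r.
  exact: in_fdualL.
have [_ [I [I_cof fI]]] := fdvalP f.
have [_ [J [J_cof gJ]]] := fdvalP g.
split; first exact: tpair_linr.
exists (tw_ideal I J); split; first exact: tw_ideal_cof.
move=> X [s [sP ->]]; rewrite (lin_sum (tpair_linr _)) big_seq big1 // => t /sP.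
rewrite tpair_tm => -[I1t|J1t].
  by rewrite fI ?mul0r //; exact: (gen_ideal_subI I_cof I1t).
by rewrite gJ ?mulr0 //; exact: (gen_ideal_subI J_cof J1t).
Qed.

Lemma tau_dual_tm_ex (f : FA) (g : FB) :
  exists eta : tens FB FA, forall X, tpair tm eta X = tpair tm (f *t g) (tau X).
Proof.
have [_ [I [I_cof fI]]] := fdvalP f.
have [_ [J [J_cof gJ]]] := fdvalP g.
pose G (b : B) (a : A) := tpair tm (f *t g) (tau (b *t a)).
have G_bilin : is_bilin G.
  split=> [a|b]; apply: lin_comp (tpair_linr _) (lin_comp tau_lin _).
    exact: (tm_bilin B A).1.
  exact: (tm_bilin B A).2.
have G_vanish (P : A -> B -> Prop) b a : tspan tm P (tau (b *t a)) ->
    (forall u v, P u v -> fdval f u * fdval g v = 0) -> G b a = 0.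
  move=> [s [sP sE]] Pfg; rewrite /G sE (lin_sum (tpair_linr _)) big_seq big1 // => t /sP.
  by rewrite tpair_tm; apply: Pfg.
have GJ b a : gen_ideal_in B0 J b -> G b a = 0.
  move=> /tau_gen_idealB /(_ a) /G_vanish; apply=> u v J1v.
  by rewrite gJ ?mulr0 //; exact: (gen_ideal_subI J_cof J1v).
have GI b a : gen_ideal_in A0 I a -> G b a = 0.
  move=> /tau_gen_idealA /(_ b) /G_vanish; apply=> u v I1u.
  by rewrite fI ?mul0r //; exact: (gen_ideal_subI I_cof I1u).
have [eta etaP] := fdual_tens_repr (gen_ideal_cof B0_subalg B0_fin.1 J_cof)
  (gen_ideal_cof A0_subalg A0_fin.1 I_cof) G_bilin GJ GI.
exists eta; apply: tpair_ext; first exact: lin_comp (tpair_linr _) tau_lin.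
by move=> b a; rewrite tpair_tmr etaP.
Qed.

Lemma tau_dual_spec (xi : tens FA FB) :
  forall X, tpair tm (tau_dual tm tau xi) X = tpair tm xi (tau X).
Proof.
have dual_ex : exists eta : tens FB FA, forall X, tpair tm eta X = tpair tm xi (tau X).
  move: xi; apply: tens_ind => [|xi xi' [eta etaP] [eta' eta'P]|f g].
  - by exists 0 => Y; rewrite !(lin0 (tpair_linl _)).
  - by exists (eta + eta') => Y; rewrite !(linD (tpair_linl _)) etaP eta'P.
  exact: tau_dual_tm_ex.
exact: (ClassicalEpsilon.epsilon_spec (inhabits 0)
  (fun eta => forall X, tpair tm eta X = tpair tm xi (tau X)) dual_ex).
Qed.

Lemma tau_dual_lin : is_lin (tau_dual tm tau).
Proof.
move=> c xi xi'; apply: tpair_inj => b a.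
by rewrite tau_dual_spec !(tpair_linl (_ *t _)) !tau_dual_spec (tpair_linl (tau _)).
Qed.

(** * The cotwisted coalgebra *)

Local Notation C := (tens FA FB).
Local Notation dA := (@fd_delta _ _ tm A (@GRing.mul A)).
Local Notation dB := (@fd_delta _ _ tm B (@GRing.mul B)).
Local Notation tD := (tau_dual tm tau).
Local Notation Dtw := (cotw_delta tm tD dA dB).

(* The nested bilinear maps inside [cotw_delta], from the innermost out. *)
Definition cd_assemble (c1 : FA) (d2 : FB) (d' : FB) (c' : FA) : tens C C :=
  (c1 *t d') *t (c' *t d2).
Definition cd_twist (c1 c2 : FA) (d1 d2 : FB) := tlift tm (cd_assemble c1 d2) (tD (c2 *t d1)).
Definition cd_splitB (c1 c2 : FA) (d : FB) := tlift tm (cd_twist c1 c2) (dB d).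
Definition cd_splitA (c : FA) (d : FB) := tlift tm (fun c1 c2 => cd_splitB c1 c2 d) (dA c).

Lemma cotw_deltaE (Xi : C) : Dtw Xi = tlift tm cd_splitA Xi.
Proof. by []. Qed.

Lemma cd_assemble_bilin c1 d2 : is_bilin (cd_assemble c1 d2).
Proof.
split=> [c'|d'].
  exact: lin_comp ((tm_bilin C C).1 (c' *t d2)) ((tm_bilin FA FB).2 c1).
exact: lin_comp ((tm_bilin C C).2 (c1 *t d')) ((tm_bilin FA FB).1 d2).
Qed.

Lemma cd_twist_bilin c1 c2 : is_bilin (cd_twist c1 c2).
Proof.
split=> [d2|d1].
  apply: lin_comp (tlift_lin (cd_assemble_bilin c1 d2)) _.
  exact: lin_comp tau_dual_lin ((tm_bilin FA FB).2 c2).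
apply: (tlift_lin_param (F := cd_assemble c1) (cd_assemble_bilin c1)) => d' c'.
exact: lin_comp ((tm_bilin C C).2 _) ((tm_bilin FA FB).2 c').
Qed.

Lemma cd_twist_linl c2 d1 d2 : is_lin (fun c1 => cd_twist c1 c2 d1 d2).
Proof.
apply: (tlift_lin_param (F := fun c1 => cd_assemble c1 d2)) => [c1|d' c'].
  exact: cd_assemble_bilin.
exact: lin_comp ((tm_bilin C C).1 _) ((tm_bilin FA FB).1 d').
Qed.

Lemma cd_twist_linr c1 d1 d2 : is_lin (fun c2 => cd_twist c1 c2 d1 d2).
Proof.
apply: lin_comp (tlift_lin (cd_assemble_bilin c1 d2)) _.
exact: lin_comp tau_dual_lin ((tm_bilin FA FB).1 d1).
Qed.

Lemma cd_splitB_bilin d : is_bilin (fun c1 c2 => cd_splitB c1 c2 d).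
Proof.
split=> [c2|c1].
  exact: (tlift_lin_param (F := fun c1 => cd_twist c1 c2)
           (fun c1 => cd_twist_bilin c1 c2) (cd_twist_linl c2)).
exact: (tlift_lin_param (F := fun c2 => cd_twist c1 c2)
         (fun c2 => cd_twist_bilin c1 c2) (cd_twist_linr c1)).
Qed.

Lemma cd_splitA_bilin : is_bilin cd_splitA.
Proof.
split=> [d|c].
  exact: lin_comp (tlift_lin (cd_splitB_bilin d)) (fd_delta_lin (bilin_mulr A)).
apply: (tlift_lin_param (F := fun d c1 c2 => cd_splitB c1 c2 d) cd_splitB_bilin).
move=> c1 c2; exact: lin_comp (tlift_lin (cd_twist_bilin c1 c2)) (fd_delta_lin (bilin_mulr B)).
Qed.

Lemma cotw_delta_lin : is_lin Dtw.
Proof. by move=> a u v; rewrite !cotw_deltaE (tlift_lin cd_splitA_bilin). Qed.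

Definition tpair2 (Om : tens C C) (X Y : tens A B) : k^o :=
  tlift tm (fun xi xi' : C => (tpair tm xi X * tpair tm xi' Y : k^o)) Om.

Lemma tpair2_integrand_bilin X Y :
  is_bilin (fun xi xi' : C => (tpair tm xi X * tpair tm xi' Y : k^o)).
Proof. exact: bilin_mul (tpair_linl X) (tpair_linl Y). Qed.

Lemma tpair2_lin X Y : is_lin (fun Om => tpair2 Om X Y).
Proof. exact: (tlift_lin (tpair2_integrand_bilin X Y)). Qed.

Lemma tpair2_tm (xi xi' : C) X Y : tpair2 (xi *t xi') X Y = tpair tm xi X * tpair tm xi' Y.
Proof. exact: (tlift_tm (tpair2_integrand_bilin X Y)). Qed.

Lemma tpair2_linl Om Y : is_lin (fun X => tpair2 Om X Y).
Proof.
apply: (tlift_lin_param (F := fun X (xi xi' : C) => (tpair tm xi X * tpair tm xi' Y : k^o))).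
  by move=> X; exact: tpair2_integrand_bilin.
by move=> xi xi'; exact: lin_comp (lin_mulr _) (tpair_linr xi).
Qed.

Lemma tpair2_linr Om X : is_lin (fun Y => tpair2 Om X Y).
Proof.
apply: (tlift_lin_param (F := fun Y (xi xi' : C) => (tpair tm xi X * tpair tm xi' Y : k^o))).
  by move=> Y; exact: tpair2_integrand_bilin.
by move=> xi xi'; exact: lin_comp (lin_mull _) (tpair_linr xi').
Qed.

Lemma tpair2_inj (Om Om' : tens C C) :
  (forall X Y, tpair2 Om X Y = tpair2 Om' X Y) -> Om = Om'.
Proof.
apply: (tens_pairing_inj (eV := fun (xi : C) X => tpair tm xi X)
                         (eW := fun (xi : C) X => tpair tm xi X)).
- by move=> X; exact: tpair_linl.
- by move=> X; exact: tpair_linl.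
- exact: tpair_sep.
- exact: tpair_sep.
Qed.

Lemma tpair2_cd_assemble c1 d2 (Z : tens FB FA) a b a' b' :
  tpair2 (tlift tm (cd_assemble c1 d2) Z) (a *t b) (a' *t b') =
  fdval c1 a * fdval d2 b' * tpair tm Z (b *t a').
Proof.
rewrite (tlift_comp (tpair2_lin _ _) (cd_assemble_bilin c1 d2)) tpair_tmr.
rewrite (tlift_ext (g := fun (d' : FB) (c' : FA) =>
   (fdval c1 a * fdval d2 b') *: (fdval d' b * fdval c' a' : k^o))).
  by rewrite tlift_scale //; exact: fpair_integrand_bilin.
by move=> d' c'; rewrite /cd_assemble tpair2_tm !tpair_tm /GRing.scale /=; ring.
Qed.

(* Both sides expand, through [fd_delta_spec] and [tau_dual_spec], into the same
   triple sum over decompositions of [dA al], [dB be] and [tau (b (x) a')]. *)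
Lemma tpair2_cotw_delta_tm (al : FA) (be : FB) a b a' b' :
  tpair2 (Dtw (al *t be)) (a *t b) (a' *t b') =
  tpair tm (al *t be) (tmul (a *t b) (a' *t b')).
Proof.
have [ls dAE] := tens_sum (dA al).
have [lr dBE] := tens_sum (dB be).
have [lt tauE] := tens_sum (tau (b *t a')).
have -> : tpair2 (Dtw (al *t be)) (a *t b) (a' *t b') =
  \sum_(s <- ls) \sum_(r <- lr) \sum_(t <- lt)
     fdval s.1 a * fdval r.2 b' * (fdval s.2 t.1 * fdval r.1 t.2).
  rewrite cotw_deltaE (tlift_tm cd_splitA_bilin) /cd_splitA dAE.
  rewrite (lin_sum (tlift_lin (cd_splitB_bilin be))) (lin_sum (tpair2_lin _ _)).
  apply: eq_bigr => s _; rewrite (tlift_tm (cd_splitB_bilin be)) /cd_splitB dBE.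
  rewrite (lin_sum (tlift_lin (cd_twist_bilin _ _))) (lin_sum (tpair2_lin _ _)).
  apply: eq_bigr => r _; rewrite (tlift_tm (cd_twist_bilin _ _)) /cd_twist.
  rewrite tpair2_cd_assemble tau_dual_spec tauE (lin_sum (tpair_linr _)) mulr_sumr.
  by apply: eq_bigr => t _; rewrite tpair_tm.
have -> : tpair tm (al *t be) (tmul (a *t b) (a' *t b')) =
  \sum_(t <- lt) (\sum_(s <- ls) fdval s.1 a * fdval s.2 t.1) *
                 (\sum_(r <- lr) fdval r.1 t.2 * fdval r.2 b').
  rewrite tmul_tm /tw_prod tauE (lin_sum (tmap_lin (lin_mull a) (lin_mulr b'))).
  rewrite (lin_sum (tpair_linr _)); apply: eq_bigr => t _.
  rewrite (tmap_tm (lin_mull a) (lin_mulr b')) tpair_tm.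
  rewrite -(fd_delta_spec (bilin_mulr A)) -(fd_delta_spec (bilin_mulr B)) dAE dBE.
  rewrite /fd_pair2 -!/(fpair _ _ _) !(lin_sum (fpair_lin _ _)).
  by congr (_ * _); apply: eq_bigr => p _; rewrite fpair_tm.
under [RHS]eq_bigr do rewrite mulr_suml.
under [RHS]eq_bigr do under eq_bigr do rewrite mulr_sumr.
rewrite [RHS]exchange_big; apply: eq_bigr => s _.
rewrite [RHS]exchange_big; apply: eq_bigr => r _.
by apply: eq_bigr => t _; ring.
Qed.

Lemma tpair2_cotw_delta (Xi : C) X Y : tpair2 (Dtw Xi) X Y = tpair tm Xi (tmul X Y).
Proof.
move: Y; apply: tens_ext => [||a' b'].
- exact: tpair2_linr.
- exact: lin_comp (tpair_linr Xi) (tmul_linr _).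
move: X; apply: tens_ext => [||a b].
- exact: tpair2_linl.
- exact: lin_comp (tpair_linr Xi) (tmul_linl _).
move: Xi; apply: tens_ext => [||al be].
- exact: lin_comp (tpair2_lin _ _) cotw_delta_lin.
- exact: tpair_linl.
exact: tpair2_cotw_delta_tm.
Qed.

Local Notation eps_tw :=
  (cotw_eps tm (@fd_eps _ A (@GRing.mul A) 1) (@fd_eps _ B (@GRing.mul B) 1)).

Lemma cotw_epsE (xi : C) : eps_tw xi = tpair tm xi (1 *t 1).
Proof. by rewrite tpair_tmr. Qed.

Lemma cotw_eps_lin : is_lin eps_tw.
Proof. by move=> c x y; rewrite !cotw_epsE (tpair_linl (1 *t 1)). Qed.

Lemma counitl_bilin : is_bilin (fun (e c' : C) => (eps_tw e : k) *: c').
Proof.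
split=> [c'|e] a u v; first by rewrite cotw_eps_lin scalerDl scalerA.
by rewrite scalerDr scalerA mulrC -scalerA.
Qed.

Lemma counitr_bilin : is_bilin (fun (c' e : C) => (eps_tw e : k) *: c').
Proof. exact: bilin_swap counitl_bilin. Qed.

Lemma tpair_counitl (Om : tens C C) X :
  tpair tm (tlift tm (fun (e c' : C) => (eps_tw e : k) *: c') Om) X = tpair2 Om (1 *t 1) X.
Proof.
move: Om; apply: tens_ext => [||e c'].
- exact: lin_comp (tpair_linl X) (tlift_lin counitl_bilin).
- exact: tpair2_lin.
by rewrite /= (tlift_tm counitl_bilin) tpair2_tm (linZ (tpair_linl X)) cotw_epsE.
Qed.

Lemma tpair_counitr (Om : tens C C) X :
  tpair tm (tlift tm (fun (c' e : C) => (eps_tw e : k) *: c') Om) X = tpair2 Om X (1 *t 1).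
Proof.
move: Om; apply: tens_ext => [||c' e].
- exact: lin_comp (tpair_linl X) (tlift_lin counitr_bilin).
- exact: tpair2_lin.
by rewrite /= (tlift_tm counitr_bilin) tpair2_tm (linZ (tpair_linl X)) cotw_epsE scaleoE mulrC.
Qed.

Lemma cotw_delta_counitl (Xi : C) :
  tlift tm (fun (e c' : C) => (eps_tw e : k) *: c') (Dtw Xi) = Xi.
Proof.
apply: tpair_inj => a b; rewrite tpair_counitl tpair2_cotw_delta.
by case: tau_twisting => _ [_ [-> _]].
Qed.

Lemma cotw_delta_counitr (Xi : C) :
  tlift tm (fun (c' e : C) => (eps_tw e : k) *: c') (Dtw Xi) = Xi.
Proof.
apply: tpair_inj => a b; rewrite tpair_counitr tpair2_cotw_delta.
by case: tau_twisting => _ [_ [_ ->]].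
Qed.

Definition tpair3 (Om : tens C (tens C C)) (X Y Z : tens A B) : k^o :=
  tlift tm (fun (xi : C) (w : tens C C) => (tpair tm xi X * tpair2 w Y Z : k^o)) Om.

Lemma tpair3_integrand_bilin X Y Z :
  is_bilin (fun (xi : C) (w : tens C C) => (tpair tm xi X * tpair2 w Y Z : k^o)).
Proof. exact: bilin_mul (tpair_linl X) (tpair2_lin Y Z). Qed.

Lemma tpair3_inj (Om Om' : tens C (tens C C)) :
  (forall X Y Z, tpair3 Om X Y Z = tpair3 Om' X Y Z) -> Om = Om'.
Proof.
move=> OmOm'; apply: (tens_pairing_inj (eV := fun (xi : C) X => tpair tm xi X)
  (eW := fun (w : tens C C) (YZ : tens A B * tens A B) => tpair2 w YZ.1 YZ.2)).
- by move=> X; exact: tpair_linl.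
- by move=> YZ; exact: tpair2_lin.
- exact: tpair_sep.
- move=> w w0; apply: tpair2_inj => Y Z; rewrite (lin0 (tpair2_lin Y Z)).
  exact: (w0 (Y, Z)).
by move=> X [Y Z]; exact: OmOm'.
Qed.

Lemma tassoc_inner_bilin :
  is_bilin (fun (Om : tens C C) (w : C) => tlift tm (fun u v : C => u *t (v *t w)) Om).
Proof.
have inner_bilin (w : C) : is_bilin (fun u v : C => u *t (v *t w)).
  exact: bilin_tm (@lin_id _ C) ((tm_bilin C C).1 w).
split=> [w|Om]; first exact: tlift_lin (inner_bilin w).
apply: (tlift_lin_param (F := fun w (u v : C) => u *t (v *t w))) => // u v.
exact: lin_comp ((tm_bilin C (tens C C)).2 u) ((tm_bilin C C).2 v).
Qed.

Lemma tpair3_tassoc (Th : tens (tens C C) C) X Y Z :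
  tpair3 (tassoc tm Th) X Y Z =
  tlift tm (fun (Om : tens C C) (ze : C) => (tpair2 Om X Y * tpair tm ze Z : k^o)) Th.
Proof.
move: Th; apply: tens_ext => [||Om ze].
- exact: lin_comp (tlift_lin (tpair3_integrand_bilin X Y Z)) (tlift_lin tassoc_inner_bilin).
- exact: tlift_lin (bilin_mul (tpair2_lin X Y) (tpair_linl Z)).
have inner_bilin : is_bilin (fun u v : C => u *t (v *t ze)).
  exact: bilin_tm (@lin_id _ C) ((tm_bilin C C).1 ze).
rewrite /= /tassoc (tlift_tm tassoc_inner_bilin).
rewrite (tlift_tm (bilin_mul (tpair2_lin X Y) (tpair_linl Z))).
rewrite /tpair3 (tlift_comp (tlift_lin (tpair3_integrand_bilin X Y Z)) inner_bilin).
rewrite (tlift_ext (g := fun u v : C => tpair tm ze Z *: (tpair tm u X * tpair tm v Y : k^o))).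
  by rewrite (tlift_scale _ (tpair2_integrand_bilin X Y)) scaleoE mulrC.
move=> u v; rewrite (tlift_tm (tpair3_integrand_bilin X Y Z)) tpair2_tm.
by rewrite /GRing.scale /=; ring.
Qed.

Lemma cotw_delta_coassoc (Xi : C) :
  tassoc tm (tmap tm Dtw id (Dtw Xi)) = tmap tm id Dtw (Dtw Xi).
Proof.
apply: tpair3_inj => X Y Z; rewrite tpair3_tassoc.
rewrite (tlift_tmap cotw_delta_lin (@lin_id _ _) (bilin_mul (tpair2_lin X Y) (tpair_linl Z))).
rewrite (tlift_ext (g := fun w ze : C => (tpair tm w (tmul X Y) * tpair tm ze Z : k^o))).
  rewrite -/(tpair2 _ _ _) tpair2_cotw_delta.
  rewrite /tpair3 (tlift_tmap (@lin_id _ _) cotw_delta_lin (tpair3_integrand_bilin X Y Z)).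
  rewrite (tlift_ext (g := fun xi w : C => (tpair tm xi X * tpair tm w (tmul Y Z) : k^o))).
    by rewrite -/(tpair2 _ _ _) tpair2_cotw_delta tmul_assoc.
  by move=> xi w; rewrite tpair2_cotw_delta.
by move=> w ze; rewrite tpair2_cotw_delta.
Qed.

Theorem tau_dual_cotwisting :
  is_cotwisting tm tD dA (@fd_eps _ A (@GRing.mul A) 1) dB (@fd_eps _ B (@GRing.mul B) 1).
Proof.
split; first exact: tau_dual_lin.
split; first exact: cotw_delta_lin.
split; first exact: cotw_eps_lin.
split; first exact: cotw_delta_coassoc.
by split; [exact: cotw_delta_counitl|exact: cotw_delta_counitr].
Qed.

Lemma cof_ideal_sliceA (K : set (tens A B)) :
  cof_ideal tmul K -> cof_ideal *%R (fun a => K (a *t 1)).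
Proof.
move=> [[K_sub K_ideal] K_fin]; have tm1_lin := (tm_bilin A B).1 1.
split; last exact: fin_codim_preimage tm1_lin K_fin.
split; first exact: subspace_preimage tm1_lin K_sub.
by move=> x y Ky; rewrite -!tmul_1tm_l; case: (K_ideal (x *t 1) _ Ky).
Qed.

Lemma cof_ideal_sliceB (K : set (tens A B)) :
  cof_ideal tmul K -> cof_ideal *%R (fun b => K (1 *t b)).
Proof.
move=> [[K_sub K_ideal] K_fin]; have tm1_lin := (tm_bilin A B).2 1.
split; last exact: fin_codim_preimage tm1_lin K_fin.
split; first exact: subspace_preimage tm1_lin K_sub.
move=> x y Ky; rewrite -[1 *t (x * y)]tmul_1tm_r -[1 *t (y * x)]tmul_1tm_r.
by case: (K_ideal (1 *t x) _ Ky).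
Qed.

(* As [a (x) b = (a (x) 1) (1 (x) b)], a functional killing a cofinite ideal
   [K] kills [a (x) b] as soon as [a (x) 1] or [1 (x) b] lies in [K]. *)
Lemma fdual_tw_repr (f : fdual tmul) : exists xi : C, forall X, tpair tm xi X = fdval f X.
Proof.
have [f_lin [K [K_cof fK]]] := fdvalP f.
have [[_ K_ideal] _] := K_cof.
have tm_split a b : a *t b = tmul (a *t 1) (1 *t b) by rewrite tmul_1tm_r mul1r.
have G_bilin := bilin_comp f_lin (tm_bilin A B).
have GA a b : K (a *t 1) -> fdval f (a *t b) = 0.
  by move=> Ka; apply: fK; rewrite tm_split; case: (K_ideal (1 *t b) _ Ka).
have GB a b : K (1 *t b) -> fdval f (a *t b) = 0.
  by move=> Kb; apply: fK; rewrite tm_split; case: (K_ideal (a *t 1) _ Kb).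
have [xi xiP] := fdual_tens_repr (cof_ideal_sliceA K_cof) (cof_ideal_sliceB K_cof) G_bilin GA GB.
by exists xi; apply: tpair_ext => // a b; rewrite tpair_tmr xiP.
Qed.

Definition dual_iso (f : fdual tmul) : C :=
  ClassicalEpsilon.epsilon (inhabits 0) (fun xi : C => forall X, tpair tm xi X = fdval f X).

Lemma dual_iso_spec f : forall X, tpair tm (dual_iso f) X = fdval f X.
Proof. exact: ClassicalEpsilon.epsilon_spec (fdual_tw_repr f). Qed.

Lemma dual_iso_lin : is_lin dual_iso.
Proof.
move=> c f g; apply: tpair_inj => a b.
by rewrite dual_iso_spec (tpair_linl (a *t b)) !dual_iso_spec.
Qed.

Lemma dual_iso_bij : bijective dual_iso.
Proof.
exists (fun xi => fdual_of (tpair_in_fdual xi)) => [f|xi].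
  by apply: fdual_ext => X; rewrite /= dual_iso_spec.
by apply: tpair_inj => a b; rewrite dual_iso_spec.
Qed.

Lemma dual_iso_delta (f : fdual tmul) :
  tmap tm dual_iso dual_iso (fd_delta tm f) = Dtw (dual_iso f).
Proof.
apply: tpair2_inj => X Y.
rewrite tpair2_cotw_delta dual_iso_spec /tpair2.
rewrite (tlift_tmap dual_iso_lin dual_iso_lin (tpair2_integrand_bilin X Y)).
rewrite (tlift_ext (g := fun u v : fdual tmul => (fdval u X * fdval v Y : k^o))).
  exact: (fd_delta_spec tmul_bilin).
by move=> u v; rewrite !dual_iso_spec.
Qed.

Lemma dual_iso_eps (f : fdual tmul) : eps_tw (dual_iso f) = fd_eps (1 *t 1) f.
Proof. by rewrite cotw_epsE dual_iso_spec. Qed.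

End TwistedAlgebra.
End TensorCalculus.

Unset Implicit Arguments.
Set Strict Implicit.

Theorem theorem4p2 (k : fieldType)
  (tens : lmodType k -> lmodType k -> lmodType k)
  (tm : forall V W : lmodType k, V -> W -> tens V W)
  (Htens : tensor_univ tm)
  (A B : algType k) (tau : tens B A -> tens A B)
  (Htau : is_twisting tm tau)
  (A0 : set A) (B0 : set B)
  (HA0 : subalg A0) (HB0 : subalg B0)
  (HfinA : finite_ext A0) (HfinB : finite_ext B0)
  (HresA : forall X, tspan tm (fun (b : B) (a : A) => A0 a) X ->
             tau X = tswap tm X)
  (HresB : forall X, tspan tm (fun (b : B) (a : A) => B0 b) X ->
             tau X = tswap tm X) :
  (* tau : B (x)^! A -> A (x)^! B is continuous for the cofinite topologies *)
  lin_continuous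
    (tens_open tm (cof_open (@GRing.mul B)) (cof_open (@GRing.mul A)))
    (tens_open tm (cof_open (@GRing.mul A)) (cof_open (@GRing.mul B)))
    tau
  /\
  (* tau° is a cotwisting map for the coalgebras A° and B° *)
  is_cotwisting tm (tau_dual tm tau)
    (@fd_delta _ _ tm A (@GRing.mul A)) (@fd_eps _ A (@GRing.mul A) 1)
    (@fd_delta _ _ tm B (@GRing.mul B)) (@fd_eps _ B (@GRing.mul B) 1)
  /\
  (* (A (x)_tau B)° is isomorphic, as a coalgebra, to A° (x)^{tau°} B° *)
  exists Phi : fdual (twisted_mul tm tau) ->
               tens (fdualA A) (fdualA B),
    is_lin Phi /\ bijective Phi /\
    (forall f, tmap tm Phi Phi (fd_delta tm f) =
               cotw_delta tm (tau_dual tm tau)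
                 (@fd_delta _ _ tm A (@GRing.mul A)) (@fd_delta _ _ tm B (@GRing.mul B))
                 (Phi f)) /\
    (forall f, cotw_eps tm (@fd_eps _ A (@GRing.mul A) 1)
                 (@fd_eps _ B (@GRing.mul B) 1) (Phi f) =
               fd_eps (tm A B 1 1) f).
Proof.
split; first exact: (tau_continuous Htens Htau HA0 HB0 HresA HresB HfinA HfinB).
split; first exact: (tau_dual_cotwisting Htens Htau HA0 HB0 HresA HresB HfinA HfinB).
exists (dual_iso (tau := tau)); split; first exact: (dual_iso_lin Htens Htau HA0 HB0 HresA HresB).
split; first exact: (dual_iso_bij Htens Htau HA0 HB0 HresA HresB HfinA HfinB).
split; first exact: (dual_iso_delta Htens Htau HA0 HB0 HresA HresB HfinA HfinB).
exact: (dual_iso_eps Htens Htau HA0 HB0 HresA HresB).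
Qed.
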